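(* Let $r>s+1$, $a_1,\dots,a_r,b_1,\dots,b_s$ as in the context, $d\in\mathbb R$ with $d\not\equiv(r-s-1)\pi\pmod{2\pi}$, $\lambda:=(\underline q-1)e^{id}$ and $\alpha:=\frac{(-1)^{1+s-r}\underline p\,a_1^{r-s-2}b_1\cdots b_s}{a_2\cdots a_r}$. Then $$L^{[d]}_{\underline q}\Big(\frac{\Theta_{\underline q}((-1)^{s-r}a_1\zeta)}{\Theta_{\underline q}((-1)^{s-r}\zeta)}\,{}_{s+1}\varphi_{r-1}\big(a_1,a_1\underline p/b_1,\dots,a_1\underline p/b_s;\ a_1\underline p/a_2,\dots,a_1\underline p/a_r;\ \underline p,\ \alpha/\zeta\big)\Big)$$ equals $$\frac{\Theta_{\underline q}((-1)^{s-r}a_1\lambda)}{\Theta_{\underline q}((-1)^{s-r}\lambda)}\,\frac{\Theta_{\underline q}(a_1z/\lambda)}{\Theta_{\underline q}(z/\lambda)}\ {}_{s+2}\varphi_{r-1}\Big(a_1,a_1\underline p/b_1,\dots,a_1\underline p/b_s,0;\ a_1\underline p/a_2,\dots,a_1\underline p/a_r;\ \underline p,\ -\frac{\alpha}{a_1\underline pz}\Big).$$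
   Context: $q>1$, $\underline q=q^{1/(r-s-1)}$, $\underline p=1/\underline q$. $a_1,\dots,a_r,b_1,\dots,b_s\in\mathbb C\setminus q^{\mathbb N}$ with pairwise distinct images in $\mathbb C^*/q^{\mathbb Z}$, $\prod a_i\ne0$. $(a;p)_0=1$, $(a;p)_{n+1}=(1-ap^n)(a;p)_n$; ${}_r\varphi_s(a_1,\dots,a_r;b_1,\dots,b_s;p,z)=\sum_{n\ge0}\frac{(a_1;p)_n\cdots(a_r;p)_n}{(p;p)_n(b_1;p)_n\cdots(b_s;p)_n}((-1)^np^{n(n-1)/2})^{1+s-r}z^n$ (a lower parameter list with $s$ entries and an upper list with $r$ entries). Jacobi theta function $\Theta_q(z)=\sum_{n\in\mathbb Z}q^{-n(n+1)/2}z^n$. The $q$-Laplace transform of Ramis–Zhang type: $L^{[d]}_{q}(f)(z)=\sum_{n\in\mathbb Z}\frac{f(q^n(q-1)e^{id})}{\Theta_q(q^{n+1}(q-1)e^{id}/z)}$ (here with $q$ replaced by $\underline q$). *)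

From Stdlib Require Import Reals Lra Lia ZArith List ClassicalEpsilon.
Open Scope R_scope.

Definition Cx : Type := (R * R)%type.
Definition RtoC (x : R) : Cx := (x, 0).
Definition C0 : Cx := (0, 0).
Definition C1 : Cx := (1, 0).
Definition Cadd (z w : Cx) : Cx := (fst z + fst w, snd z + snd w).
Definition Copp (z : Cx) : Cx := (- fst z, - snd z).
Definition Csub (z w : Cx) : Cx := Cadd z (Copp w).
Definition Cmul (z w : Cx) : Cx :=
  (fst z * fst w - snd z * snd w, fst z * snd w + snd z * fst w).
Definition Cinv (z : Cx) : Cx :=
  let n := fst z * fst z + snd z * snd z in (fst z / n, - snd z / n).
Definition Cdiv (z w : Cx) : Cx := Cmul z (Cinv w).
Fixpoint Cpow (z : Cx) (n : nat) : Cx :=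
  match n with O => C1 | S m => Cmul z (Cpow z m) end.
Definition Cpowz (z : Cx) (k : Z) : Cx :=
  match k with
  | Z0 => C1
  | Zpos p => Cpow z (Pos.to_nat p)
  | Zneg p => Cinv (Cpow z (Pos.to_nat p))
  end.
Definition Cexpi (d : R) : Cx := (cos d, sin d).

Fixpoint Cprod_range (f : nat -> Cx) (m len : nat) : Cx :=
  match len with O => C1 | S l => Cmul (f m) (Cprod_range f (S m) l) end.

Fixpoint Cpartial (u : nat -> Cx) (N : nat) : Cx :=
  match N with O => u O | S M => Cadd (Cpartial u M) (u (S M)) end.

Definition series_cv (u : nat -> Cx) (l : Cx) : Prop :=
  Un_cv (fun N => fst (Cpartial u N)) (fst l) /\
  Un_cv (fun N => snd (Cpartial u N)) (snd l).

Definition bseries_cv (u : Z -> Cx) (l : Cx) : Prop :=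
  exists l1 l2,
    series_cv (fun n => u (Z.of_nat n)) l1 /\
    series_cv (fun n => u (- Z.of_nat (S n))%Z) l2 /\
    l = Cadd l1 l2.

Definition C_inhabited : inhabited Cx := inhabits C0.

(** value of a (convergent) series; unspecified if divergent *)
Definition csum (u : nat -> Cx) : Cx := epsilon C_inhabited (fun l => series_cv u l).
Definition bsum (u : Z -> Cx) : Cx := epsilon C_inhabited (fun l => bseries_cv u l).

Fixpoint qpoch (a p : Cx) (n : nat) : Cx :=
  match n with O => C1 | S m => Cmul (Csub C1 (Cmul a (Cpow p m))) (qpoch a p m) end.

Definition qpoch_list (l : list Cx) (p : Cx) (n : nat) : Cx :=
  fold_right (fun x acc => Cmul (qpoch x p n) acc) C1 l.

(** general term of  r phi s (upper; lower; p, z), r = length upper, s = length lower *)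
Definition phi_term (upper lower : list Cx) (p z : Cx) (n : nat) : Cx :=
  Cmul (Cdiv (qpoch_list upper p n) (Cmul (qpoch p p n) (qpoch_list lower p n)))
   (Cmul (Cpowz (Cmul (Cpow (RtoC (-1)) n) (Cpow p (Nat.div (n * (n - 1)) 2)))
                (1 + Z.of_nat (length lower) - Z.of_nat (length upper))%Z)
         (Cpow z n)).

Definition phi (upper lower : list Cx) (p z : Cx) : Cx := csum (phi_term upper lower p z).

Definition phi_converges (upper lower : list Cx) (p z : Cx) : Prop :=
  exists l, series_cv (phi_term upper lower p z) l.

Definition theta_term (q : R) (z : Cx) (n : Z) : Cx :=
  Cmul (RtoC (powerRZ q (- Z.div (n * (n + 1)) 2))) (Cpowz z n).
Definition Theta (q : R) (z : Cx) : Cx := bsum (theta_term q z).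

Definition qLaplace_term (q d : R) (f : Cx -> Cx) (z : Cx) (n : Z) : Cx :=
  Cdiv (f (Cmul (RtoC (powerRZ q n * (q - 1))) (Cexpi d)))
       (Theta q (Cdiv (Cmul (RtoC (powerRZ q (n + 1) * (q - 1))) (Cexpi d)) z)).

Definition qLaplace (q d : R) (f : Cx -> Cx) (z : Cx) : Cx := bsum (qLaplace_term q d f z).

(* The transform is evaluated at the nodes zeta_n = Q^n lam.  There the theta quotient is a
   constant R0 times theta_term(v, n), and expanding phi in powers of al/zeta_n writes the
   n-th term as R0 * sum_m E_m theta_term(Q^-m v, n).  Summing over n first instead, the
   functional equation turns row m into Theta(v) times the m-th term of the target series;
   absolute summability justifies the interchange ([theta_interchange]). *)

From Stdlib Require Import Reals ZArith List Lra Lia Psatz Classical ClassicalEpsilon.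
From Coquelicot Require Import Rbar Hierarchy Lim_seq Series.
From Coquelicot Require Complex.

Open Scope R_scope.
Set Bullet Behavior "Strict Subproofs".

(* The field of complex numbers: [Cx] with [Cadd], [Cmul] and the total inverse [Cinv]
   (with [Cinv C0 = C0]). *)

Lemma Cx_ext (z w : Cx) : fst z = fst w -> snd z = snd w -> z = w.
Proof. destruct z, w; simpl; intros; subst; reflexivity. Qed.

Lemma Cx_ring : ring_theory C0 C1 Cadd Cmul Csub Copp (@eq Cx).
Proof.
  constructor; intros; unfold C0, C1, Cadd, Cmul, Csub, Copp;
  apply Cx_ext; simpl; ring.
Qed.

Lemma C1_neq_C0 : C1 <> C0.
Proof. unfold C1, C0; intro H; injection H; lra. Qed.

Lemma Cinv_l (z : Cx) : z <> C0 -> Cmul (Cinv z) z = C1.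
Proof.
  destruct z as [x y]; intro H; unfold Cinv, Cmul, C1; simpl.
  assert (Hn : x * x + y * y <> 0).
  { intro E. apply H. unfold C0. assert (x = 0) by nra. assert (y = 0) by nra. subst; reflexivity. }
  apply Cx_ext; simpl; field; auto.
Qed.

Lemma Cx_field : field_theory C0 C1 Cadd Cmul Csub Copp Cdiv Cinv (@eq Cx).
Proof.
  constructor.
  - exact Cx_ring.
  - exact C1_neq_C0.
  - reflexivity.
  - exact Cinv_l.
Qed.

Add Field Cx_field_inst : Cx_field.

Lemma Cinv_C0 : Cinv C0 = C0.
Proof. unfold Cinv, C0; apply Cx_ext; simpl; unfold Rdiv; rewrite ?Rmult_0_l, ?Rplus_0_l; ring. Qed.

Lemma Cmul_assoc x y z : Cmul x (Cmul y z) = Cmul (Cmul x y) z.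
Proof. ring. Qed.
Lemma Cmul_comm x y : Cmul x y = Cmul y x.
Proof. ring. Qed.

Lemma Cmul_0_l z : Cmul C0 z = C0.
Proof. field. Qed.
Lemma Cmul_0_r z : Cmul z C0 = C0.
Proof. field. Qed.

Lemma Cmul_eq0 x y : Cmul x y = C0 -> x = C0 \/ y = C0.
Proof.
  intro H. destruct (classic (x = C0)) as [Hx|Hx]; [now left|right].
  assert (E : y = Cmul (Cinv x) (Cmul x y)) by (field; auto).
  rewrite H, Cmul_0_r in E; exact E.
Qed.

Lemma Cmul_neq0 x y : x <> C0 -> y <> C0 -> Cmul x y <> C0.
Proof. intros Hx Hy H; destruct (Cmul_eq0 _ _ H); auto. Qed.

Lemma Cinv_neq0 x : x <> C0 -> Cinv x <> C0.
Proof. intros Hx H. apply C1_neq_C0. rewrite <- (Cinv_l x Hx), H. apply Cmul_0_l. Qed.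

Lemma Cinv_mul (x y : Cx) : Cinv (Cmul x y) = Cmul (Cinv x) (Cinv y).
Proof.
  destruct (classic (x = C0)) as [Hx|Hx].
  { subst. rewrite Cmul_0_l, Cinv_C0, Cmul_0_l; reflexivity. }
  destruct (classic (y = C0)) as [Hy|Hy].
  { subst. rewrite Cmul_0_r, Cinv_C0, Cmul_0_r; reflexivity. }
  field. split; auto. 
Qed.

Lemma Cinv_inv z : Cinv (Cinv z) = z.
Proof.
  destruct (classic (z = C0)) as [H|H].
  - subst; rewrite !Cinv_C0; reflexivity.
  - assert (H' : Cinv z <> C0) by (apply Cinv_neq0; auto).
    assert (E : Cmul (Cinv (Cinv z)) (Cinv z) = C1) by (apply Cinv_l; auto).
    assert (E2 : Cmul (Cinv z) z = C1) by (apply Cinv_l; auto).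
    transitivity (Cmul (Cinv (Cinv z)) (Cmul (Cinv z) z)); [rewrite E2; ring|].
    transitivity (Cmul (Cmul (Cinv (Cinv z)) (Cinv z)) z); [ring|].
    rewrite E; ring.
Qed.

Lemma RtoC_mul x y : RtoC (x * y) = Cmul (RtoC x) (RtoC y).
Proof. unfold RtoC, Cmul; apply Cx_ext; simpl; ring. Qed.
Lemma RtoC_inv x : RtoC (/ x) = Cinv (RtoC x).
Proof.
  unfold RtoC, Cinv; apply Cx_ext; simpl.
  - destruct (Req_dec x 0) as [->|Hx].
    + rewrite Rinv_0; unfold Rdiv; ring.
    + field; auto.
  - unfold Rdiv; ring.
Qed.
Lemma RtoC_1 : RtoC 1 = C1. Proof. reflexivity. Qed.
Lemma RtoC_neq0 x : x <> 0 -> RtoC x <> C0.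
Proof. intros H E; apply H; unfold RtoC, C0 in E; injection E; auto. Qed.

Lemma Cpow_add z m n : Cpow z (m + n) = Cmul (Cpow z m) (Cpow z n).
Proof. induction m; simpl; [field|]. rewrite IHm; field. Qed.
Lemma Cpow_mul_l z w n : Cpow (Cmul z w) n = Cmul (Cpow z n) (Cpow w n).
Proof. induction n; simpl; [field|]. rewrite IHn; field. Qed.
Lemma Cpow_inv z n : Cpow (Cinv z) n = Cinv (Cpow z n).
Proof. induction n; simpl. - unfold Cinv, C1; apply Cx_ext; simpl; field. - rewrite IHn, Cinv_mul; reflexivity. Qed.
Lemma Cpow_RtoC x n : Cpow (RtoC x) n = RtoC (x ^ n).
Proof. induction n; simpl; [reflexivity|]. rewrite IHn, RtoC_mul; reflexivity. Qed.
Lemma Cpow_neq0 z n : z <> C0 -> Cpow z n <> C0.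
Proof. intro H; induction n; simpl; [exact C1_neq_C0|]. apply Cmul_neq0; auto. Qed.
Lemma Cpow_C1 n : Cpow C1 n = C1.
Proof. induction n; simpl; [reflexivity|]. rewrite IHn; field. Qed.
Lemma Cpow_S z n : Cpow z (S n) = Cmul (Cpow z n) z.
Proof. simpl; field. Qed.

Lemma Cpowz_nat z n : Cpowz z (Z.of_nat n) = Cpow z n.
Proof. destruct n; [reflexivity|]. simpl. rewrite SuccNat2Pos.id_succ. reflexivity. Qed.
Lemma Cpowz_opp z k : Cpowz z (- k) = Cinv (Cpowz z k).
Proof.
  destruct k; simpl.
  - unfold Cinv, C1; apply Cx_ext; simpl; field.
  - reflexivity.
  - rewrite Cinv_inv; reflexivity.
Qed.
Lemma Cpowz_neq0 z k : z <> C0 -> Cpowz z k <> C0.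
Proof.
  intro H. destruct k; simpl.
  - exact C1_neq_C0.
  - apply Cpow_neq0; auto.
  - apply Cinv_neq0, Cpow_neq0; auto.
Qed.

Lemma Cpowz_succ z k : z <> C0 -> Cpowz z (k + 1) = Cmul (Cpowz z k) z.
Proof.
  intro Hz.
  destruct (Z_le_gt_dec 0 k) as [Hk|Hk].
  - destruct (Z_of_nat_complete _ Hk) as [n ->].
    replace (Z.of_nat n + 1)%Z with (Z.of_nat (S n)) by lia.
    rewrite !Cpowz_nat. apply Cpow_S.
  - assert (exists n, k = (- Z.of_nat (S n))%Z) as [n ->].
    { exists (Z.to_nat (- k) - 1)%nat. lia. }
    replace (- Z.of_nat (S n) + 1)%Z with (- Z.of_nat n)%Z by lia.
    rewrite !Cpowz_opp, !Cpowz_nat, Cpow_S, Cinv_mul.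
    assert (Cpow z n <> C0) by (apply Cpow_neq0; auto).
    field. split; auto.
Qed.

Lemma Cpowz_pred z k : z <> C0 -> Cpowz z (k - 1) = Cmul (Cpowz z k) (Cinv z).
Proof.
  intro Hz. replace k with ((k - 1) + 1)%Z at 2 by lia.
  rewrite Cpowz_succ by auto. field. auto.
Qed.

Lemma Cpowz_add z a b : z <> C0 -> Cpowz z (a + b) = Cmul (Cpowz z a) (Cpowz z b).
Proof.
  intro Hz. pattern b. apply Z.peano_ind.
  - rewrite Z.add_0_r. simpl. field.
  - intros x IH. rewrite Z.add_succ_r, <- !Z.add_1_r, !Cpowz_succ, IH by auto. field.
  - intros x IH. rewrite Z.add_pred_r, <- !Z.sub_1_r, !Cpowz_pred, IH by auto. field. auto.
Qed.

Lemma Cpowz_mul_l z w k : Cpowz (Cmul z w) k = Cmul (Cpowz z k) (Cpowz w k).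
Proof.
  destruct k; simpl.
  - field.
  - apply Cpow_mul_l.
  - rewrite Cpow_mul_l, Cinv_mul. reflexivity.
Qed.

Lemma Cpowz_inv z k : Cpowz (Cinv z) k = Cinv (Cpowz z k).
Proof.
  destruct k; simpl.
  - unfold Cinv, C1; apply Cx_ext; simpl; field.
  - apply Cpow_inv.
  - rewrite Cpow_inv; reflexivity.
Qed.

Lemma Cpowz_RtoC x k : Cpowz (RtoC x) k = RtoC (powerRZ x k).
Proof.
  destruct k; simpl.
  - reflexivity.
  - rewrite Cpow_RtoC; reflexivity.
  - rewrite Cpow_RtoC, RtoC_inv; reflexivity.
Qed.

Lemma powerRZ_powerRZ x a b : x <> 0 -> powerRZ (powerRZ x a) b = powerRZ x (a * b).
Proof.
  intro Hx.
  assert (Hn : forall n : nat, powerRZ (powerRZ x a) (Z.of_nat n) = powerRZ x (a * Z.of_nat n)).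
  { induction n.
    - rewrite Z.mul_0_r; reflexivity.
    - rewrite Nat2Z.inj_succ, <- Z.add_1_r, powerRZ_add, IHn.
      + rewrite Z.mul_add_distr_l, Z.mul_1_r, powerRZ_add by auto. simpl. ring.
      + apply powerRZ_NOR; auto. }
  destruct (Z_le_gt_dec 0 b) as [Hb|Hb].
  - destruct (Z_of_nat_complete _ Hb) as [n ->]. apply Hn.
  - replace b with (- Z.of_nat (Z.to_nat (- b)))%Z by lia.
    rewrite powerRZ_neg', Hn, <- powerRZ_neg'. f_equal. lia.
Qed.

Lemma Cpowz_Cpowz_RtoC x j n : x <> 0 ->
  Cpowz (RtoC (powerRZ x j)) n = RtoC (powerRZ x (j * n)).
Proof. intro Hx. rewrite Cpowz_RtoC, powerRZ_powerRZ; auto. Qed.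

Lemma RtoC_powerRZ_neq0 Q k : 0 < Q -> RtoC (powerRZ Q k) <> C0.
Proof. intro; apply RtoC_neq0. pose proof (powerRZ_lt Q k H); lra. Qed.

Lemma RtoC_powerRZ_opp Q k : RtoC (powerRZ Q (- k)) = Cinv (RtoC (powerRZ Q k)).
Proof. rewrite powerRZ_neg', RtoC_inv. reflexivity. Qed.

Lemma RtoC_powerRZ_add Q a b : 0 < Q -> RtoC (powerRZ Q (a + b)) = Cmul (RtoC (powerRZ Q a)) (RtoC (powerRZ Q b)).
Proof. intro. rewrite powerRZ_add, RtoC_mul by lra. reflexivity. Qed.

Definition Cnorm (z : Cx) : R := Complex.Cmod z.
Lemma Cnorm_mul z w : Cnorm (Cmul z w) = Cnorm z * Cnorm w.
Proof. exact (Complex.Cmod_mult z w). Qed.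
Lemma Cnorm_ge0 z : 0 <= Cnorm z.
Proof. exact (Complex.Cmod_ge_0 z). Qed.
Lemma Cnorm_eq0 z : Cnorm z = 0 -> z = C0.
Proof. exact (Complex.Cmod_eq_0 z). Qed.
Lemma Cnorm_C0 : Cnorm C0 = 0.
Proof. exact Complex.Cmod_0. Qed.
Lemma Cnorm_gt0 z : z <> C0 -> 0 < Cnorm z.
Proof. intro H. destruct (Cnorm_ge0 z) as [h|h]; auto. exfalso; apply H, Cnorm_eq0; auto. Qed.
Lemma Cnorm_RtoC x : Cnorm (RtoC x) = Rabs x.
Proof. exact (Complex.Cmod_R x). Qed.
Lemma Cnorm_add z w : Cnorm (Cadd z w) <= Cnorm z + Cnorm w.
Proof. exact (Complex.Cmod_triangle z w). Qed.
Lemma Cnorm_opp z : Cnorm (Copp z) = Cnorm z.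
Proof. exact (Complex.Cmod_opp z). Qed.
Lemma Cnorm_C1 : Cnorm C1 = 1.
Proof. exact Complex.Cmod_1. Qed.
Lemma Cnorm_inv z : Cnorm (Cinv z) = / Cnorm z.
Proof.
  destruct (classic (z = C0)) as [->|H].
  - rewrite Cinv_C0, Cnorm_C0, Rinv_0; reflexivity.
  - assert (E : Cnorm (Cinv z) * Cnorm z = 1) by (rewrite <- Cnorm_mul, Cinv_l, Cnorm_C1; auto).
    assert (0 < Cnorm z) by (apply Cnorm_gt0; auto).
    apply Rmult_eq_reg_r with (Cnorm z); [|lra]. rewrite E. field. lra.
Qed.
Lemma Cnorm_pow z n : Cnorm (Cpow z n) = Cnorm z ^ n.
Proof. induction n; simpl; [apply Cnorm_C1|]. rewrite Cnorm_mul, IHn; reflexivity. Qed.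
Lemma Cnorm_powz z k : Cnorm (Cpowz z k) = powerRZ (Cnorm z) k.
Proof. destruct k; simpl; [apply Cnorm_C1| apply Cnorm_pow|]. rewrite Cnorm_inv, Cnorm_pow; reflexivity. Qed.
Lemma Cnorm_sub z w : Cnorm (Csub z w) <= Cnorm z + Cnorm w.
Proof. unfold Csub. rewrite <- (Cnorm_opp w). apply Cnorm_add. Qed.
Lemma Cnorm_sub_ge z w : Cnorm z - Cnorm w <= Cnorm (Csub z w).
Proof.
  assert (E : z = Cadd (Csub z w) w) by (unfold Csub; field).
  pose proof (Cnorm_add (Csub z w) w). rewrite <- E in H. lra.
Qed.
Lemma Cnorm_fst z : Rabs (fst z) <= Cnorm z.
Proof. pose proof (Complex.Rmax_Cmod z). pose proof (Rmax_l (Rabs (fst z)) (Rabs (snd z))). unfold Cnorm; lra. Qed.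
Lemma Cnorm_snd z : Rabs (snd z) <= Cnorm z.
Proof. pose proof (Complex.Rmax_Cmod z). pose proof (Rmax_r (Rabs (fst z)) (Rabs (snd z))). unfold Cnorm; lra. Qed.
Lemma Cnorm_expi d : Cnorm (Cexpi d) = 1.
Proof.
  unfold Cnorm, Complex.Cmod, Cexpi; simpl.
  pose proof (sin2_cos2 d) as E. unfold Rsqr in E.
  replace (cos d * (cos d * 1) + sin d * (sin d * 1)) with 1 by nra. apply sqrt_1.
Qed.

Lemma Cnorm_le_sum z : Cnorm z <= Rabs (fst z) + Rabs (snd z).
Proof.
  destruct z as [x y]. unfold Cnorm, Complex.Cmod. simpl.
  pose proof (Rabs_pos x). pose proof (Rabs_pos y).
  rewrite <- (sqrt_square (Rabs x + Rabs y)) by lra.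
  apply sqrt_le_1_alt.
  assert (Rabs x * Rabs x = x * x) by (rewrite <- Rabs_mult; apply Rabs_pos_eq; nra).
  assert (Rabs y * Rabs y = y * y) by (rewrite <- Rabs_mult; apply Rabs_pos_eq; nra).
  nra.
Qed.

Lemma Cpartial_fst u N : fst (Cpartial u N) = sum_f_R0 (fun k => fst (u k)) N.
Proof. induction N; simpl; [reflexivity|]. rewrite IHN; reflexivity. Qed.
Lemma Cpartial_snd u N : snd (Cpartial u N) = sum_f_R0 (fun k => snd (u k)) N.
Proof. induction N; simpl; [reflexivity|]. rewrite IHN; reflexivity. Qed.

Lemma series_cv_iff u l : series_cv u l <->
  (is_series (fun n => fst (u n)) (fst l) /\ is_series (fun n => snd (u n)) (snd l)).
Proof.
  unfold series_cv. rewrite !is_series_Reals. unfold infinite_sum, Un_cv.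
  split; intros [H1 H2]; split; intros eps Heps;
    [destruct (H1 eps Heps) as [N HN] | destruct (H2 eps Heps) as [N HN]
    |destruct (H1 eps Heps) as [N HN] | destruct (H2 eps Heps) as [N HN]];
    exists N; intros n Hn; specialize (HN n Hn);
    rewrite ?Cpartial_fst, ?Cpartial_snd in *; exact HN.
Qed.

Lemma is_series_lin (a b : nat -> R) la lb (x y : R) :
  is_series a la -> is_series b lb ->
  is_series (fun n => x * a n + y * b n) (x * la + y * lb).
Proof.
  intros Ha Hb.
  apply (is_series_plus (fun n => x * a n) (fun n => y * b n) (x * la) (y * lb)).
  - apply (is_series_scal_l x a la Ha).
  - apply (is_series_scal_l y b lb Hb).
Qed.

Lemma series_cv_unique u l1 l2 : series_cv u l1 -> series_cv u l2 -> l1 = l2.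
Proof.
  rewrite !series_cv_iff; intros [A1 B1] [A2 B2].
  apply Cx_ext.
  - rewrite <- (is_series_unique _ _ A1), <- (is_series_unique _ _ A2); reflexivity.
  - rewrite <- (is_series_unique _ _ B1), <- (is_series_unique _ _ B2); reflexivity.
Qed.

Lemma series_cv_ext u v l : (forall n, u n = v n) -> series_cv u l -> series_cv v l.
Proof.
  intros E; rewrite !series_cv_iff; intros [A B]; split;
  [eapply is_series_ext; [|exact A] | eapply is_series_ext; [|exact B]];
  intro n; simpl; rewrite E; reflexivity.
Qed.

Lemma series_cv_add u v l1 l2 : series_cv u l1 -> series_cv v l2 ->
  series_cv (fun n => Cadd (u n) (v n)) (Cadd l1 l2).
Proof.
  rewrite !series_cv_iff; intros [A1 B1] [A2 B2]; split; simpl.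
  - exact (is_series_plus _ _ _ _ A1 A2).
  - exact (is_series_plus _ _ _ _ B1 B2).
Qed.

Lemma series_cv_scal c u l : series_cv u l -> series_cv (fun n => Cmul c (u n)) (Cmul c l).
Proof.
  rewrite !series_cv_iff; intros [A B]; split; simpl.
  - pose proof (is_series_lin _ _ _ _ (fst c) (- snd c) A B) as H.
    eapply is_series_ext; [|replace (fst c * fst l - snd c * snd l) with (fst c * fst l + - snd c * snd l) by ring; exact H].
    intro n; simpl; ring.
  - pose proof (is_series_lin _ _ _ _ (snd c) (fst c) A B) as H.
    eapply is_series_ext; [|replace (fst c * snd l + snd c * fst l) with (snd c * fst l + fst c * snd l) by ring; exact H].
    intro n; simpl; ring.
Qed.

Lemma series_cv_shift u l : series_cv u l -> series_cv (fun n => u (S n)) (Csub l (u O)).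
Proof.
  rewrite !series_cv_iff; intros [A B]; split; simpl.
  - apply (is_series_incr_1 (fun n => fst (u n))).
    match goal with |- is_series _ ?x => replace x with (fst l) by (cbv [plus]; simpl; ring) end; exact A.
  - apply (is_series_incr_1 (fun n => snd (u n))).
    match goal with |- is_series _ ?x => replace x with (snd l) by (cbv [plus]; simpl; ring) end; exact B.
Qed.

Lemma series_cv_unshift u l : series_cv (fun n => u (S n)) l -> series_cv u (Cadd (u O) l).
Proof.
  rewrite !series_cv_iff; intros [A B]; split; simpl.
  - apply (is_series_decr_1 (fun n => fst (u n))).
    match goal with |- is_series _ ?x => replace x with (fst l) by (cbv [plus opp]; simpl; ring) end; exact A.
  - apply (is_series_decr_1 (fun n => snd (u n))).
    match goal with |- is_series _ ?x => replace x with (snd l) by (cbv [plus opp]; simpl; ring) end; exact B.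
Qed.

Lemma series_cv_zero : series_cv (fun _ => C0) C0.
Proof.
  assert (Z : forall N, Cpartial (fun _ => C0) N = C0).
  { induction N; simpl; [reflexivity|]. rewrite IHN. unfold Cadd, C0; simpl. f_equal; ring. }
  split; intros eps Heps; exists O; intros n _; rewrite Z; simpl; unfold Rdist; rewrite Rminus_0_r, Rabs_R0; lra.
Qed.

Lemma series_cv_abs u : ex_series (fun n => Cnorm (u n)) -> exists l, series_cv u l.
Proof.
  intro H.
  assert (H1 : ex_series (fun n => fst (u n))).
  { apply (ex_series_le (fun n => fst (u n)) (fun n => Cnorm (u n))); auto.
    intro n. apply Cnorm_fst. }
  assert (H2 : ex_series (fun n => snd (u n))).
  { apply (ex_series_le (fun n => snd (u n)) (fun n => Cnorm (u n))); auto.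
    intro n. apply Cnorm_snd. }
  destruct H1 as [l1 H1], H2 as [l2 H2].
  exists (l1, l2). apply series_cv_iff; simpl; auto.
Qed.

Lemma series_cv_terms_to0 u l : series_cv u l -> forall e, 0 < e -> exists N, forall n, (N <= n)%nat -> Cnorm (u n) < e.
Proof.
  intros H e He. apply series_cv_iff in H. destruct H as [H1 H2].
  pose proof (ex_series_lim_0 _ (ex_intro _ _ H1)) as L1.
  pose proof (ex_series_lim_0 _ (ex_intro _ _ H2)) as L2.
  apply is_lim_seq_Reals in L1, L2.
  destruct (L1 (e / 2) ltac:(lra)) as [N1 HN1], (L2 (e / 2) ltac:(lra)) as [N2 HN2].
  exists (Nat.max N1 N2). intros n Hn.
  specialize (HN1 n ltac:(lia)). specialize (HN2 n ltac:(lia)). unfold Rdist in *. rewrite Rminus_0_r in *.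
  pose proof (Cnorm_le_sum (u n)). lra.
Qed.

Lemma series_cv_real_inv (a : nat -> R) l : series_cv (fun n => RtoC (a n)) l -> is_series a (fst l) /\ snd l = 0.
Proof.
  intro H. apply series_cv_iff in H. destruct H as [H1 H2]. split; [exact H1|].
  pose proof (series_cv_zero) as Z. apply series_cv_iff in Z. destruct Z as [_ Z].
  simpl in *. pose proof (is_series_unique _ _ Z). pose proof (is_series_unique _ _ H2).
  unfold RtoC in H2. simpl in H2. congruence.
Qed.

Lemma is_series_ge0 (a : nat -> R) (l : R) : (forall n, 0 <= a n) -> is_series a l -> 0 <= l.
Proof.
  intros Hp H.
  assert (L : is_lim_seq (sum_n a) l) by exact H.
  assert (L0 : is_lim_seq (fun _ : nat => 0) 0) by apply is_lim_seq_const.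
  pose proof (is_lim_seq_le (fun _ => 0) (sum_n a) 0 l) as K.
  simpl in K. apply K; auto.
  intro n. rewrite sum_n_Reals. induction n; simpl; auto. specialize (Hp (S n)). lra.
Qed.

Lemma csum_spec u l : series_cv u l -> csum u = l.
Proof.
  intro H. unfold csum.
  exact (series_cv_unique u _ _ (epsilon_spec C_inhabited (fun l => series_cv u l) (ex_intro _ l H)) H).
Qed.

(* Bilateral series over Z.  The value is independent of where Z is split, so shifts
   and the reflection n |-> -n preserve it. *)
Lemma bseries_cv_unique u l1 l2 : bseries_cv u l1 -> bseries_cv u l2 -> l1 = l2.
Proof.
  intros [a [b [Ha [Hb ->]]]] [c [e [Hc [He ->]]]].
  rewrite (series_cv_unique _ _ _ Ha Hc), (series_cv_unique _ _ _ Hb He). reflexivity.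
Qed.

Lemma bsum_spec u l : bseries_cv u l -> bsum u = l.
Proof.
  intro H. unfold bsum.
  exact (bseries_cv_unique u _ _ (epsilon_spec C_inhabited (fun l => bseries_cv u l) (ex_intro _ l H)) H).
Qed.

Lemma bseries_cv_ext u v l : (forall n, u n = v n) -> bseries_cv u l -> bseries_cv v l.
Proof.
  intros E [a [b [Ha [Hb ->]]]]. exists a, b; split; [|split]; auto;
  eapply series_cv_ext; try eassumption; intro n; simpl; rewrite E; reflexivity.
Qed.

Lemma bseries_cv_scal c u l : bseries_cv u l -> bseries_cv (fun n => Cmul c (u n)) (Cmul c l).
Proof.
  intros [a [b [Ha [Hb ->]]]]. exists (Cmul c a), (Cmul c b); split; [|split].
  - apply (series_cv_scal c _ _ Ha).
  - apply (series_cv_scal c _ _ Hb).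
  - field.
Qed.

Lemma bseries_cv_shift_succ u l : bseries_cv u l -> bseries_cv (fun n => u (n + 1)%Z) l.
Proof.
  intros [a [b [Ha [Hb ->]]]].
  exists (Csub a (u 0%Z)), (Cadd (u 0%Z) b); split; [|split].
  - apply series_cv_shift in Ha. eapply series_cv_ext; [|exact Ha]. intro n. cbv beta. f_equal. rewrite ?Nat2Z.inj_succ. lia.
  - assert (H : series_cv (fun k => u (- Z.of_nat k)%Z) (Cadd (u 0%Z) b)).
    { apply (series_cv_unshift (fun k => u (- Z.of_nat k)%Z)). exact Hb. }
    eapply series_cv_ext; [|exact H]. intro n. cbv beta. f_equal. rewrite ?Nat2Z.inj_succ. lia.
  - unfold Csub; field.
Qed.

Lemma bseries_cv_shift_pred u l : bseries_cv u l -> bseries_cv (fun n => u (n - 1)%Z) l.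
Proof.
  intros [a [b [Ha [Hb ->]]]].
  exists (Cadd (u (-1)%Z) a), (Csub b (u (-1)%Z)); split; [|split].
  - apply (series_cv_unshift (fun k => u (Z.of_nat k - 1)%Z)).
    eapply series_cv_ext; [|exact Ha]. intro n. cbv beta. f_equal. rewrite ?Nat2Z.inj_succ. lia.
  - apply series_cv_shift in Hb. eapply series_cv_ext; [|exact Hb]. intro n. cbv beta. f_equal. rewrite ?Nat2Z.inj_succ. lia.
  - unfold Csub; field.
Qed.

Lemma bseries_cv_shift u l j : bseries_cv u l -> bseries_cv (fun n => u (n + j)%Z) l.
Proof.
  intro H. pattern j. apply Z.peano_ind.
  - eapply bseries_cv_ext; [|exact H]. intro n; f_equal; lia.
  - intros x IH. apply bseries_cv_shift_succ in IH. eapply bseries_cv_ext; [|exact IH]. intro n; simpl; f_equal; lia.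
  - intros x IH. apply bseries_cv_shift_pred in IH. eapply bseries_cv_ext; [|exact IH]. intro n; simpl; f_equal; lia.
Qed.

Lemma bseries_cv_reflect u l : bseries_cv u l -> bseries_cv (fun n => u (- n)%Z) l.
Proof.
  intros [a [b [Ha [Hb ->]]]].
  exists (Cadd (u 0%Z) b), (Csub a (u 0%Z)); split; [|split].
  - apply (series_cv_unshift (fun k => u (- Z.of_nat k)%Z)). exact Hb.
  - apply series_cv_shift in Ha. eapply series_cv_ext; [|exact Ha]. intro n. cbv beta. rewrite Z.opp_involutive; reflexivity.
  - unfold Csub; field.
Qed.

Lemma bseries_cv_abs u : ex_series (fun n => Cnorm (u (Z.of_nat n))) ->
  ex_series (fun n => Cnorm (u (- Z.of_nat (S n))%Z)) -> exists l, bseries_cv u l.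
Proof.
  intros H1 H2. destruct (series_cv_abs _ H1) as [a Ha], (series_cv_abs _ H2) as [b Hb].
  exists (Cadd a b), a, b; auto.
Qed.

Lemma series_tail (b : nat -> R) (l : R) N : is_series b l ->
  is_series (fun k => b (S N + k)%nat) (l - sum_f_R0 b N).
Proof.
  intro H. apply (is_series_incr_n b (S N)); [lia|]. simpl pred.
  rewrite sum_n_Reals.
  match goal with |- is_series _ ?x => replace x with l by (cbv [plus]; simpl; ring) end. exact H.
Qed.

Lemma partial_sum_le (b : nat -> R) (l : R) : (forall k, 0 <= b k) -> is_series b l -> forall N, sum_f_R0 b N <= l.
Proof.
  intros Hp H N. pose proof (series_tail b l N H) as T.
  pose proof (is_series_ge0 _ _ (fun k => Hp _) T). lra.
Qed.

Lemma term_le_series (b : nat -> R) (l : R) : (forall k, 0 <= b k) -> is_series b l -> forall N, b N <= l.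
Proof.
  intros Hp H N. pose proof (partial_sum_le b l Hp H N).
  destruct N; simpl in *; [lra|]. 
  assert (0 <= sum_f_R0 b N) by (apply cond_pos_sum; auto). lra.
Qed.

Lemma series_remainder_cv (b : nat -> R) (l : R) : is_series b l -> Un_cv (fun N => l - sum_f_R0 b N) 0.
Proof.
  intro H. apply is_series_Reals in H. intros eps Heps. destruct (H eps Heps) as [N HN].
  exists N; intros n Hn. specialize (HN n Hn). unfold Rdist in *.
  rewrite Rminus_0_r. rewrite Rabs_minus_sym. exact HN.
Qed.

Lemma finsum_cv (b : nat -> nat -> R) M : (forall m, Un_cv (b m) 0) ->
  Un_cv (fun N => sum_f_R0 (fun m => b m N) M) 0.
Proof.
  intro H. induction M; simpl.
  - apply H.
  - replace 0 with (0 + 0) by ring. apply CV_plus; auto.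
Qed.

Lemma dominated_tails_cv (b : nat -> nat -> R) (A : nat -> R) (SA : R) :
  (forall m N, 0 <= b m N <= A m) -> is_series A SA ->
  (forall m, Un_cv (b m) 0) ->
  (forall N, ex_series (fun m => b m N)) /\ Un_cv (fun N => Series (fun m => b m N)) 0.
Proof.
  intros Hb HA Hc.
  assert (Ex : forall N, ex_series (fun m => b m N)).
  { intro N. apply (@ex_series_le R_AbsRing R_CompleteNormedModule _ A); [|exists SA; auto].
    intro m. change (norm (b m N)) with (Rabs (b m N)). rewrite Rabs_pos_eq; apply Hb. }
  split; auto.
  intros eps Heps.
  destruct (series_remainder_cv A SA HA (eps / 2)) as [M HM]; [lra|].
  specialize (HM M (le_n _)). unfold Rdist in HM. rewrite Rminus_0_r in HM.
  destruct (finsum_cv b M Hc (eps / 2)) as [N0 HN0]; [lra|].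
  exists N0. intros N HN. specialize (HN0 N HN). unfold Rdist in *. rewrite Rminus_0_r in *.
  destruct (Ex N) as [lb Hlb].
  pose proof (series_tail _ _ M Hlb) as T1. pose proof (series_tail _ _ M HA) as T2.
  assert (Le : lb - sum_f_R0 (fun m => b m N) M <= SA - sum_f_R0 A M).
  { rewrite <- (is_series_unique _ _ T1), <- (is_series_unique _ _ T2).
    apply Series_le; [|eexists; exact T2]. intro k; apply Hb. }
  rewrite (is_series_unique _ _ Hlb).
  assert (0 <= lb) by (apply (is_series_ge0 _ _ (fun m => proj1 (Hb m N)) Hlb)).
  assert (0 <= sum_f_R0 (fun m => b m N) M) by (apply cond_pos_sum; intro; apply Hb).
  rewrite Rabs_pos_eq in * by auto.
  assert (0 <= SA - sum_f_R0 A M) by (rewrite <- (is_series_unique _ _ T2); apply (is_series_ge0 _ _ (fun k => Rle_trans _ _ _ (proj1 (Hb (S M + k)%nat O)) (proj2 (Hb (S M + k)%nat O)))); apply Series_correct; eexists; exact T2).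
  rewrite Rabs_pos_eq in HM by auto. lra.
Qed.

Lemma series_remainder_abs_le (a : nat -> R) N : ex_series (fun n => Rabs (a n)) ->
  Rabs (Series a - sum_f_R0 a N) <= Series (fun n => Rabs (a n)) - sum_f_R0 (fun n => Rabs (a n)) N.
Proof.
  intro Habs.
  pose proof (series_tail _ _ N (Series_correct _ (ex_series_Rabs _ Habs))) as T1.
  pose proof (series_tail _ _ N (Series_correct _ Habs)) as T2.
  rewrite <- (is_series_unique _ _ T1), <- (is_series_unique _ _ T2).
  apply Series_Rabs. eexists; exact T2.
Qed.

Lemma Series_partial_sums_comm (g : nat -> nat -> R) N : (forall n, ex_series (fun m => g m n)) ->
  ex_series (fun m => sum_f_R0 (g m) N) /\
  sum_f_R0 (fun n => Series (fun m => g m n)) N = Series (fun m => sum_f_R0 (g m) N).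
Proof.
  intro Hn. induction N as [|N [IHex IHeq]]; simpl; [split; auto |].
  split.
  - apply (ex_series_plus (V := R_NormedModule)); auto.
  - rewrite IHeq, <- Series_plus; auto.
Qed.

Lemma fubini_R (g : nat -> nat -> R) :
  (forall m, ex_series (fun n => Rabs (g m n))) ->
  ex_series (fun m => Series (fun n => Rabs (g m n))) ->
  (forall n, ex_series (fun m => g m n)) /\
  is_series (fun n => Series (fun m => g m n)) (Series (fun m => Series (fun n => g m n))).
Proof.
  intros Hm HA.
  set (A := fun m => Series (fun n => Rabs (g m n))).
  assert (HAc : forall m, is_series (fun n => Rabs (g m n)) (A m)) by (intro m; apply Series_correct, Hm).
  assert (Hbound : forall m n, Rabs (g m n) <= A m).
  { intros m n. apply (term_le_series (fun n => Rabs (g m n))); auto. intro; apply Rabs_pos. }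
  assert (Hn : forall n, ex_series (fun m => g m n)).
  { intro n. apply (@ex_series_le R_AbsRing R_CompleteNormedModule _ A); auto. }
  split; auto.
  set (H := fun m => Series (g m)).
  assert (ExS : forall N, ex_series (fun m => sum_f_R0 (g m) N))
    by (intro N; apply (Series_partial_sums_comm g N Hn)).
  assert (Hpartial : forall N, sum_f_R0 (fun n => Series (fun m => g m n)) N =
                           Series (fun m => sum_f_R0 (g m) N))
    by (intro N; apply (Series_partial_sums_comm g N Hn)).
  assert (HHs : ex_series H).
  { apply (@ex_series_le R_AbsRing R_CompleteNormedModule _ A); auto.
    intro m. apply Series_Rabs, Hm. }
  set (t := fun m N => A m - sum_f_R0 (fun n => Rabs (g m n)) N).
  assert (Ht : forall m N, 0 <= t m N <= A m).
  { intros m N; unfold t; split.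
    - pose proof (partial_sum_le _ _ (fun k => Rabs_pos _) (HAc m) N); lra.
    - assert (0 <= sum_f_R0 (fun n => Rabs (g m n)) N) by (apply cond_pos_sum; intro; apply Rabs_pos). lra. }
  assert (Htail : forall m N, Rabs (H m - sum_f_R0 (g m) N) <= t m N)
    by (intros m N; apply series_remainder_abs_le, Hm).
  assert (HAs : is_series A (Series A)) by (apply Series_correct; exact HA).
  destruct (dominated_tails_cv t A (Series A) Ht HAs) as [Ext Cvt].
  { intro m. apply (series_remainder_cv _ _ (HAc m)). }
  apply is_series_Reals. intros eps Heps.
  destruct (Cvt eps Heps) as [N0 HN0]. exists N0. intros N HN.
  specialize (HN0 N HN). unfold Rdist in *. rewrite Rminus_0_r in HN0.
  rewrite Hpartial.
  assert (E : Series (fun m => sum_f_R0 (g m) N) - Series H = - Series (fun m => H m - sum_f_R0 (g m) N)).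
  { rewrite Series_minus; auto. ring. }
  rewrite E, Rabs_Ropp.
  assert (Exd : ex_series (fun m => Rabs (H m - sum_f_R0 (g m) N))).
  { apply (@ex_series_le R_AbsRing R_CompleteNormedModule _ (fun m => t m N)); auto.
    intro m. change (norm (Rabs (H m - sum_f_R0 (g m) N))) with (Rabs (Rabs (H m - sum_f_R0 (g m) N))).
    rewrite Rabs_Rabsolu. apply Htail. }
  eapply Rle_lt_trans; [apply Series_Rabs; exact Exd|].
  eapply Rle_lt_trans; [apply Series_le; [|exact (Ext N)]|].
  { intro m; split; [apply Rabs_pos| apply Htail]. }
  rewrite Rabs_pos_eq in HN0; auto.
  apply (is_series_ge0 _ _ (fun m => proj1 (Ht m N))). apply Series_correct, Ext.
Qed.

Lemma Series_ge0 (a : nat -> R) : (forall n, 0 <= a n) -> ex_series a -> 0 <= Series a.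
Proof. intros H E. apply (is_series_ge0 a); auto. apply Series_correct; auto. Qed.

Lemma fubini_comp (G : nat -> nat -> Cx) (pr : Cx -> R) :
  (forall z, Rabs (pr z) <= Cnorm z) ->
  (forall m, ex_series (fun n => Cnorm (G m n))) ->
  ex_series (fun m => Series (fun n => Cnorm (G m n))) ->
  (forall n, ex_series (fun m => pr (G m n))) /\
  (forall m, ex_series (fun n => pr (G m n))) /\
  is_series (fun n => Series (fun m => pr (G m n))) (Series (fun m => Series (fun n => pr (G m n)))) /\
  ex_series (fun m => Series (fun n => pr (G m n))).
Proof.
  intros Hpr Hm HA.
  assert (H1 : forall m, ex_series (fun n => Rabs (pr (G m n)))).
  { intro m. apply (@ex_series_le R_AbsRing R_CompleteNormedModule _ (fun n => Cnorm (G m n))); auto.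
    intro n. change (norm (Rabs (pr (G m n)))) with (Rabs (Rabs (pr (G m n)))). rewrite Rabs_Rabsolu; auto. }
  assert (H2 : ex_series (fun m => Series (fun n => Rabs (pr (G m n))))).
  { apply (@ex_series_le R_AbsRing R_CompleteNormedModule _ (fun m => Series (fun n => Cnorm (G m n)))); auto.
    intro m. change (norm (Series (fun n => Rabs (pr (G m n))))) with (Rabs (Series (fun n => Rabs (pr (G m n))))).
    rewrite Rabs_pos_eq by (apply Series_ge0; auto; intro; apply Rabs_pos).
    apply Series_le; auto. intro n; split; auto; apply Rabs_pos. }
  destruct (fubini_R _ H1 H2) as [A B]. split; [|split; [|split]]; auto.
  - intro m. apply ex_series_Rabs; auto.
  - apply (@ex_series_le R_AbsRing R_CompleteNormedModule _ (fun m => Series (fun n => Rabs (pr (G m n))))); [|exact H2].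
    intro m. apply Series_Rabs; auto.
Qed.

Lemma fubini_C (G : nat -> nat -> Cx) :
  (forall m, ex_series (fun n => Cnorm (G m n))) ->
  ex_series (fun m => Series (fun n => Cnorm (G m n))) ->
  exists F H : nat -> Cx, (forall n, series_cv (fun m => G m n) (F n)) /\
    (forall m, series_cv (G m) (H m)) /\ exists L, series_cv F L /\ series_cv H L.
Proof.
  intros Hm HA.
  destruct (fubini_comp G fst Cnorm_fst Hm HA) as [A1 [B1 [C1 D1]]].
  destruct (fubini_comp G snd Cnorm_snd Hm HA) as [A2 [B2 [C2 D2]]].
  exists (fun n => (Series (fun m => fst (G m n)), Series (fun m => snd (G m n)))).
  exists (fun m => (Series (fun n => fst (G m n)), Series (fun n => snd (G m n)))).
  split; [|split].
  - intro n. apply series_cv_iff; simpl; split; apply Series_correct; auto.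
  - intro m. apply series_cv_iff; simpl; split; apply Series_correct; auto.
  - exists (Series (fun m => Series (fun n => fst (G m n))), Series (fun m => Series (fun n => snd (G m n)))).
    split; apply series_cv_iff; simpl; split; auto; apply Series_correct; auto.
Qed.

Lemma pow_large (x C : R) : 1 < x -> exists N, forall n, (N <= n)%nat -> C <= x ^ n.
Proof.
  intro Hx.
  assert (B : forall n, 1 + INR n * (x - 1) <= x ^ n).
  { induction n; [simpl; lra|]. rewrite S_INR. simpl.
    assert (0 <= INR n) by apply pos_INR. assert (1 <= x ^ n) by (apply pow_R1_Rle; lra). nra. }
  destruct (INR_unbounded (Rabs C / (x - 1))) as [N HN].
  exists N. intros n Hn. specialize (B n).
  assert (INR N <= INR n) by (apply le_INR; auto).
  assert (Rabs C / (x - 1) * (x - 1) = Rabs C) by (field; lra).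
  assert (C <= Rabs C) by apply RRle_abs.
  assert (INR n * (x - 1) >= Rabs C / (x - 1) * (x - 1)) by (apply Rmult_ge_compat_r; lra).
  lra.
Qed.

Lemma ratio_test (a : nat -> R) N rho : 0 <= rho < 1 -> (forall n, 0 <= a n) ->
  (forall n, (N <= n)%nat -> a (S n) <= rho * a n) -> ex_series a.
Proof.
  intros Hr Hp Hrat.
  assert (K : forall k, a (N + k)%nat <= a N * rho ^ k).
  { induction k. - rewrite Nat.add_0_r; simpl; lra.
    - replace (N + S k)%nat with (S (N + k)) by lia.
      eapply Rle_trans; [apply Hrat; lia|]. simpl.
      apply Rle_trans with (rho * (a N * rho ^ k)); [apply Rmult_le_compat_l; lra| lra]. }
  apply (ex_series_incr_n a N).
  apply (@ex_series_le R_AbsRing R_CompleteNormedModule _ (fun k => a N * rho ^ k)).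
  - intro k. change (norm (a (N + k)%nat)) with (Rabs (a (N + k)%nat)). rewrite Rabs_pos_eq; auto.
  - destruct (ex_series_geom rho) as [l Hl]; [rewrite Rabs_pos_eq; lra|].
    exists (a N * l). apply (is_series_scal_l (a N) _ _ Hl).
Qed.

Lemma pow_small (P C : R) : 0 < P < 1 -> 0 < C -> exists N, forall n, (N <= n)%nat -> P ^ n <= C.
Proof.
  intros HP HC. destruct (pow_large (/ P) (/ C)) as [N HN].
  { apply Rmult_lt_reg_l with P; [lra|]. rewrite Rinv_r; lra. }
  exists N. intros n Hn. specialize (HN n Hn). rewrite pow_inv in HN.
  assert (0 < P ^ n) by (apply pow_lt; lra).
  apply Rinv_le_contravar in HN; [|apply Rinv_0_lt_compat; lra].
  rewrite !Rinv_inv in HN. exact HN.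
Qed.

Lemma pow_le1 x n : 0 <= x <= 1 -> x ^ n <= 1.
Proof. intro H; induction n; simpl; [lra|]. assert (0 <= x ^ n) by (apply pow_le; lra). nra. Qed.

Definition ztri (n : Z) : Z := (n * (n + 1) / 2)%Z.

Lemma ztri_double n : (2 * ztri n = n * (n + 1))%Z.
Proof.
  unfold ztri. destruct (Z.Even_or_Odd n) as [[k ->]|[k ->]].
  - replace (2 * k * (2 * k + 1))%Z with ((k * (2 * k + 1)) * 2)%Z by ring.
    rewrite Z.div_mul by lia. ring.
  - replace ((2 * k + 1) * (2 * k + 1 + 1))%Z with (((2 * k + 1) * (k + 1)) * 2)%Z by ring.
    rewrite Z.div_mul by lia. ring.
Qed.

Lemma ztri_succ n : ztri (n + 1) = (ztri n + n + 1)%Z.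
Proof. pose proof (ztri_double n). pose proof (ztri_double (n + 1)). nia. Qed.

(* The exponent identity behind the functional equation of theta. *)
Lemma ztri_shift n j : (- ztri n + j * n = ztri (j - 1) - ztri (n - j))%Z.
Proof. pose proof (ztri_double n). pose proof (ztri_double (j - 1)). pose proof (ztri_double (n - j)). nia. Qed.

Lemma ztri_opp n : ztri (- n) = ztri (n - 1).
Proof. pose proof (ztri_double (- n)). pose proof (ztri_double (n - 1)). nia. Qed.

Lemma theta_term_eq q y n : theta_term q y n = Cmul (RtoC (powerRZ q (- ztri n))) (Cpowz y n).
Proof. reflexivity. Qed.

Lemma theta_term_shift q y j n : 0 < q -> y <> C0 ->
  theta_term q (Cmul (RtoC (powerRZ q j)) y) n =
  Cmul (Cmul (RtoC (powerRZ q (ztri (j - 1)))) (Cpowz y j)) (theta_term q y (n - j)).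
Proof.
  intros Hq Hy. rewrite !theta_term_eq.
  rewrite Cpowz_mul_l, Cpowz_Cpowz_RtoC by lra.
  transitivity (Cmul (RtoC (powerRZ q (- ztri n + j * n))) (Cpowz y n)).
  { rewrite powerRZ_add by lra. rewrite RtoC_mul. ring. }
  rewrite ztri_shift. unfold Z.sub at 1. rewrite powerRZ_add by lra.
  replace (Cpowz y n) with (Cmul (Cpowz y j) (Cpowz y (n - j))).
  - rewrite RtoC_mul. ring.
  - rewrite <- Cpowz_add by auto. f_equal. ring.
Qed.

Lemma theta_term_succ q y n : 0 < q -> y <> C0 ->
  theta_term q y (n + 1) = Cmul (theta_term q y n) (Cmul (RtoC (powerRZ q (- (n + 1)))) y).
Proof.
  intros Hq Hy. rewrite !theta_term_eq, ztri_succ, Cpowz_succ by auto.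
  replace (- (ztri n + n + 1))%Z with (- ztri n + - (n + 1))%Z by ring.
  rewrite powerRZ_add, RtoC_mul by lra. ring.
Qed.

Lemma theta_term_reflect q t n : 0 < q -> t <> C0 ->
  theta_term q (Cinv t) (- n) = theta_term q (Cmul (RtoC q) t) n.
Proof.
  intros Hq Ht. rewrite !theta_term_eq, ztri_opp, Cpowz_inv, Cpowz_opp, Cinv_inv.
  rewrite Cpowz_mul_l, Cpowz_RtoC.
  replace (- ztri (n - 1))%Z with (- ztri n + n)%Z.
  - rewrite powerRZ_add, RtoC_mul by lra. simpl. ring.
  - pose proof (ztri_succ (n - 1)). replace (n - 1 + 1)%Z with n in H by ring. lia.
Qed.

Lemma Cnorm_theta_term_succ q y n : 0 < q -> y <> C0 ->
  Cnorm (theta_term q y (n + 1)) = Cnorm (theta_term q y n) * (powerRZ q (- (n + 1)) * Cnorm y).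
Proof.
  intros Hq Hy. rewrite theta_term_succ by auto. rewrite !Cnorm_mul, Cnorm_RtoC, Rabs_pos_eq; [ring|].
  left; apply powerRZ_lt; auto.
Qed.

(* Both halves of the theta series converge absolutely (ratio test: the ratio of
   consecutive terms is [y Q^-(n+1)]). *)
Lemma theta_pos_half q y : 1 < q -> y <> C0 ->
  ex_series (fun n => Cnorm (theta_term q y (Z.of_nat n))).
Proof.
  intros Hq Hy.
  destruct (pow_large q (2 * Cnorm y) Hq) as [N HN].
  apply (ratio_test _ N (1/2)); [lra| intro; apply Cnorm_ge0 |].
  intros n Hn. rewrite Nat2Z.inj_succ, <- Z.add_1_r, Cnorm_theta_term_succ by (auto; lra).
  replace (Z.of_nat n + 1)%Z with (Z.of_nat (S n)) by lia. rewrite powerRZ_neg', <- pow_powerRZ.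
  pose proof (HN (S n) ltac:(lia)). pose proof (Cnorm_ge0 (theta_term q y (Z.of_nat n))).
  pose proof (Cnorm_gt0 y Hy).
  assert (0 < q ^ S n) by (apply pow_lt; lra).
  assert (/ q ^ S n * Cnorm y <= 1/2).
  { apply Rmult_le_reg_l with (q ^ S n); auto. field_simplify; lra. }
  nra.
Qed.

Lemma theta_neg_half q y : 1 < q -> y <> C0 ->
  ex_series (fun n => Cnorm (theta_term q y (- Z.of_nat (S n)))).
Proof.
  intros Hq Hy.
  destruct (pow_large q (2 / Cnorm y) Hq) as [N HN].
  apply (ratio_test _ N (1/2)); [lra| intro; apply Cnorm_ge0 |].
  intros n Hn.
  pose proof (Cnorm_theta_term_succ q y (- Z.of_nat (S (S n))) ltac:(lra) Hy) as E.
  replace (- Z.of_nat (S (S n)) + 1)%Z with (- Z.of_nat (S n))%Z in E by lia.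
  rewrite E.
  rewrite Z.opp_involutive, <- pow_powerRZ.
  pose proof (HN (S n) ltac:(lia)). pose proof (Cnorm_ge0 (theta_term q y (- Z.of_nat (S (S n))))).
  pose proof (Cnorm_gt0 y Hy).
  assert (2 <= q ^ S n * Cnorm y).
  { replace 2 with (2 / Cnorm y * Cnorm y) by (field; lra). apply Rmult_le_compat_r; lra. }
  nra.
Qed.

Lemma theta_ex_cv q y : 1 < q -> y <> C0 -> exists l, bseries_cv (theta_term q y) l.
Proof. intros; apply bseries_cv_abs; [apply theta_pos_half| apply theta_neg_half]; auto. Qed.

Lemma theta_cv q y : 1 < q -> y <> C0 -> bseries_cv (theta_term q y) (Theta q y).
Proof.
  intros Hq Hy. destruct (theta_ex_cv q y Hq Hy) as [l Hl].
  unfold Theta. rewrite (bsum_spec _ _ Hl). exact Hl.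
Qed.

Lemma theta_shift q y j : 1 < q -> y <> C0 ->
  Theta q (Cmul (RtoC (powerRZ q j)) y) =
  Cmul (Cmul (RtoC (powerRZ q (ztri (j - 1)))) (Cpowz y j)) (Theta q y).
Proof.
  intros Hq Hy. apply bsum_spec.
  pose proof (bseries_cv_shift _ _ (- j) (theta_cv q y Hq Hy)) as H.
  apply (bseries_cv_scal (Cmul (RtoC (powerRZ q (ztri (j - 1)))) (Cpowz y j))) in H.
  eapply bseries_cv_ext; [|exact H]. intro n. rewrite theta_term_shift by (auto; lra). f_equal.
Qed.

Lemma theta_inv q t : 1 < q -> t <> C0 -> Theta q (Cinv t) = Theta q (Cmul (RtoC q) t).
Proof.
  intros Hq Ht. apply bsum_spec.
  assert (Hqt : Cmul (RtoC q) t <> C0) by (apply Cmul_neq0; auto; apply RtoC_neq0; lra).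
  pose proof (bseries_cv_reflect _ _ (theta_cv q (Cmul (RtoC q) t) Hq Hqt)) as H.
  eapply bseries_cv_ext; [|exact H]. intro n. cbv beta. rewrite <- theta_term_reflect by (auto; lra).
  rewrite Z.opp_involutive. reflexivity.
Qed.

Lemma theta_qshift q t : 1 < q -> t <> C0 -> Theta q (Cmul (RtoC q) t) = Cmul t (Theta q t).
Proof.
  intros Hq Ht. pose proof (theta_shift q t 1 Hq Ht) as H. simpl in H.
  replace (RtoC (q * 1)) with (RtoC q) in H by (f_equal; ring).
  rewrite H. unfold ztri. simpl. rewrite RtoC_1. ring.
Qed.

Lemma theta_qinv q t : 1 < q -> t <> C0 -> Theta q (Cmul (RtoC q) (Cinv t)) = Theta q t.
Proof.
  intros Hq Ht. assert (Cinv t <> C0) by (apply Cinv_neq0; auto).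
  rewrite theta_qshift, theta_inv by auto. rewrite theta_qshift by auto. field. auto.
Qed.

Lemma theta_term_real q t n : theta_term q (RtoC t) n = RtoC (powerRZ q (- ztri n) * powerRZ t n).
Proof. rewrite theta_term_eq, Cpowz_RtoC, RtoC_mul; reflexivity. Qed.

Lemma Cnorm_theta_term q y n : 0 < q -> Cnorm (theta_term q y n) = powerRZ q (- ztri n) * powerRZ (Cnorm y) n.
Proof.
  intro Hq. rewrite theta_term_eq, Cnorm_mul, Cnorm_RtoC, Cnorm_powz, Rabs_pos_eq; auto.
  left; apply powerRZ_lt; auto.
Qed.

Lemma theta_halves_bound q y : 1 < q -> y <> C0 ->
  Series (fun n => Cnorm (theta_term q y (Z.of_nat n))) <= fst (Theta q (RtoC (Cnorm y))) /\
  Series (fun n => Cnorm (theta_term q y (- Z.of_nat (S n)))) <= fst (Theta q (RtoC (Cnorm y))).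
Proof.
  intros Hq Hy.
  assert (Ht : RtoC (Cnorm y) <> C0) by (apply RtoC_neq0; pose proof (Cnorm_gt0 y Hy); lra).
  destruct (theta_cv q _ Hq Ht) as [l1 [l2 [H1 [H2 E]]]].
  rewrite E.
  assert (R1 : is_series (fun n => Cnorm (theta_term q y (Z.of_nat n))) (fst l1)).
  { assert (H1' : series_cv (fun n => RtoC (Cnorm (theta_term q y (Z.of_nat n)))) l1).
    { refine (series_cv_ext _ _ _ _ H1). intro n. cbv beta. rewrite theta_term_real, Cnorm_theta_term by lra. reflexivity. }
    apply series_cv_real_inv in H1'. apply H1'. }
  assert (R2 : is_series (fun n => Cnorm (theta_term q y (- Z.of_nat (S n)))) (fst l2)).
  { assert (H2' : series_cv (fun n => RtoC (Cnorm (theta_term q y (- Z.of_nat (S n))))) l2).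
    { refine (series_cv_ext _ _ _ _ H2). intro n. cbv beta. rewrite theta_term_real, Cnorm_theta_term by lra. reflexivity. }
    apply series_cv_real_inv in H2'. apply H2'. }
  pose proof (is_series_ge0 _ _ (fun n => Cnorm_ge0 _) R1).
  pose proof (is_series_ge0 _ _ (fun n => Cnorm_ge0 _) R2).
  rewrite (is_series_unique _ _ R1), (is_series_unique _ _ R2). simpl. lra.
Qed.

(* [qfactors l p n = prod_(x in l) (1 - x p^n)]: the factors added to [qpoch_list l p] at
   step [n]. *)
Definition qfactors (l : list Cx) (p : Cx) (n : nat) : Cx :=
  fold_right (fun x acc => Cmul (Csub C1 (Cmul x (Cpow p n))) acc) C1 l.

Lemma qpoch_list_S l p n : qpoch_list l p (S n) = Cmul (qpoch_list l p n) (qfactors l p n).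
Proof.
  induction l as [|x l IH].
  - unfold qpoch_list, qfactors; cbn [fold_right]. field.
  - unfold qpoch_list, qfactors in *. cbn [fold_right]. rewrite IH. cbn [qpoch]. ring.
Qed.

Lemma half_tri_succ n : (S n * (S n - 1) / 2 = n * (n - 1) / 2 + n)%nat.
Proof.
  replace (S n * (S n - 1))%nat with (n * (n - 1) + n * 2)%nat.
  - rewrite Nat.div_add by lia. reflexivity.
  - destruct n; simpl; [reflexivity|]. rewrite Nat.sub_0_r. nia.
Qed.

Definition qsign (p : Cx) (n : nat) : Cx := Cmul (Cpow (RtoC (-1)) n) (Cpow p (Nat.div (n * (n - 1)) 2)).

Lemma qsign_succ p n : qsign p (S n) = Cmul (qsign p n) (Copp (Cpow p n)).
Proof.
  unfold qsign. rewrite half_tri_succ, Cpow_add, Cpow_S. unfold RtoC. 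
  transitivity (Cmul (Cmul (Cpow (-1, 0) n) (Cpow p (n * (n - 1) / 2))) (Cmul (-1,0) (Cpow p n))); [ring|].
  f_equal. unfold Cmul, Copp; apply Cx_ext; simpl; ring.
Qed.

Definition phi_coef (U L : list Cx) (p : Cx) (n : nat) : Cx :=
  Cdiv (qpoch_list U p n) (qpoch_list (p :: L) p n).

Lemma phi_term_eq U L p z n k :
  (1 + Z.of_nat (length L) - Z.of_nat (length U))%Z = Z.of_nat k ->
  phi_term U L p z n = Cmul (phi_coef U L p n) (Cmul (Cpow (qsign p n) k) (Cpow z n)).
Proof.
  intro Hk. unfold phi_term, phi_coef. rewrite Hk, Cpowz_nat. reflexivity.
Qed.

Lemma phi_term_succ U L p z n k :
  (1 + Z.of_nat (length L) - Z.of_nat (length U))%Z = Z.of_nat k ->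
  phi_term U L p z (S n) = Cmul (phi_term U L p z n)
     (Cmul (Cmul (qfactors U p n) (Cinv (qfactors (p :: L) p n))) (Cmul (Cpow (Copp (Cpow p n)) k) z)).
Proof.
  intro Hk. rewrite !(phi_term_eq U L p z _ k Hk). unfold phi_coef, Cdiv.
  rewrite !qpoch_list_S, qsign_succ, Cpow_mul_l, Cinv_mul, Cpow_S. ring.
Qed.

Lemma phi_term_0 U L p z : phi_term U L p z O = C1.
Proof.
  unfold phi_term. simpl.
  assert (E : forall l, qpoch_list l p O = C1).
  { induction l as [|x l IH]; [reflexivity|]. unfold qpoch_list in *. cbn [fold_right]. rewrite IH. cbn [qpoch]. field. }
  rewrite !E. change (qpoch p p 0) with C1. cbn [Cpow]. simpl (0 * (0 - 1) / 2)%nat. cbn [Cpow].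
  replace (Cmul C1 C1) with C1 by field.
  assert (P1 : forall k, Cpowz C1 k = C1).
  { intro k; destruct k; simpl; rewrite ?Cpow_C1; try reflexivity. unfold Cinv, C1; apply Cx_ext; simpl; field. }
  rewrite P1. unfold Cdiv. unfold Cinv, C1, Cmul; apply Cx_ext; simpl; field.
Qed.

Lemma qpoch_C0 p n : qpoch C0 p n = C1.
Proof. induction n; [reflexivity|]. cbn [qpoch]. rewrite IHn. unfold Csub; field. Qed.

Lemma qpoch_list_app0 l p n : qpoch_list (l ++ C0 :: nil) p n = qpoch_list l p n.
Proof.
  induction l as [|x l IH]; unfold qpoch_list in *; simpl.
  - rewrite qpoch_C0. field.
  - rewrite IH. reflexivity.
Qed.

(* An extra upper parameter 0 does not change the coefficients (only the exponent k). *)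
Lemma phi_coef_app0 U L p n : phi_coef (U ++ C0 :: nil) L p n = phi_coef U L p n.
Proof. unfold phi_coef. rewrite qpoch_list_app0. reflexivity. Qed.

Lemma qfactors_neq0 l p n : (forall x, In x l -> Csub C1 (Cmul x (Cpow p n)) <> C0) -> qfactors l p n <> C0.
Proof.
  induction l as [|x l IH]; intro H; unfold qfactors in *; simpl.
  - exact C1_neq_C0.
  - apply Cmul_neq0; [apply H; left; auto| apply IH; intros; apply H; right; auto].
Qed.

Lemma qfactors_upper l p n M : (forall x, In x l -> Cnorm x <= M) ->
  Cnorm (qfactors l p n) <= (1 + M * Cnorm p ^ n) ^ length l.
Proof.
  induction l as [|x l IH]; intro H.
  - simpl. rewrite Cnorm_C1. lra.
  - unfold qfactors in *; cbn [fold_right length]. rewrite Cnorm_mul. simpl pow.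
    assert (Hx : Cnorm x <= M) by (apply H; left; auto).
    assert (IH' := IH (fun y Hy => H y (or_intror Hy))).
    assert (A : Cnorm (Csub C1 (Cmul x (Cpow p n))) <= 1 + M * Cnorm p ^ n).
    { eapply Rle_trans; [apply Cnorm_sub|]. rewrite Cnorm_C1, Cnorm_mul, Cnorm_pow.
      pose proof (pow_le (Cnorm p) n (Cnorm_ge0 p)). nra. }
    apply Rmult_le_compat; auto using Cnorm_ge0.
Qed.

Lemma qfactors_lower l p n M : M * Cnorm p ^ n <= 1 -> (forall x, In x l -> Cnorm x <= M) ->
  (1 - M * Cnorm p ^ n) ^ length l <= Cnorm (qfactors l p n).
Proof.
  intro Hd. induction l as [|x l IH]; intro H.
  - simpl. rewrite Cnorm_C1. lra.
  - unfold qfactors in *; cbn [fold_right length]. rewrite Cnorm_mul. simpl pow.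
    assert (Hx : Cnorm x <= M) by (apply H; left; auto).
    assert (IH' := IH (fun y Hy => H y (or_intror Hy))).
    assert (A : 1 - M * Cnorm p ^ n <= Cnorm (Csub C1 (Cmul x (Cpow p n)))).
    { eapply Rle_trans; [|apply Cnorm_sub_ge]. rewrite Cnorm_C1, Cnorm_mul, Cnorm_pow.
      pose proof (pow_le (Cnorm p) n (Cnorm_ge0 p)). nra. }
    apply Rmult_le_compat; auto. lra. apply pow_le. lra.
Qed.

Definition norm_sum (l : list Cx) : R := fold_right (fun x acc => Cnorm x + acc) 0 l.
Lemma norm_sum_ge0 l : 0 <= norm_sum l.
Proof. induction l; simpl; [lra|]. pose proof (Cnorm_ge0 a); lra. Qed.
Lemma norm_sum_in l x : In x l -> Cnorm x <= norm_sum l.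
Proof.
  induction l as [|y l IH]; simpl; [tauto|]. intros [->|H].
  - pose proof (norm_sum_ge0 l); lra.
  - pose proof (IH H); pose proof (Cnorm_ge0 y); lra.
Qed.

Lemma bernoulli_ineq d N : 0 <= d <= 1 -> 1 - INR N * d <= (1 - d) ^ N.
Proof.
  intro Hd. induction N; [simpl; lra|]. rewrite S_INR. simpl pow.
  assert (0 <= INR N) by apply pos_INR. assert (0 <= (1 - d) ^ N) by (apply pow_le; lra). nra.
Qed.

Lemma one_plus_minus_pow_le1 d a : 0 <= d < 1 -> (1 + d) ^ a * (1 - d) ^ a <= 1.
Proof.
  intro Hd. rewrite <- Rpow_mult_distr. 
  assert (0 <= (1 + d) * (1 - d) <= 1) by nra.
  induction a; simpl; [lra|]. assert (0 <= ((1 + d) * (1 - d)) ^ a) by (apply pow_le; lra). nra.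
Qed.

(* The real inequality behind the ratio test for phi: a ratio of products of factors
   within [d] of 1, times a quantity [<= c < 1], is at most [(1 + c)/2] once [d] is small. *)
Lemma ratio_upper_bound (a b : nat) (d c X Y Z : R) :
  0 <= d <= 1/2 -> INR (a + b) * d <= (1 - c) / (1 + c) -> 0 <= c < 1 ->
  0 <= X <= (1 + d) ^ a -> (1 - d) ^ b <= Y -> 0 <= Z <= c -> X * / Y * Z <= (1 + c) / 2.
Proof.
  intros Hd HN Hc HX HY HZ.
  set (A := (1 - d) ^ a) in *. set (B := (1 - d) ^ b) in *.
  assert (HA : 0 < A) by (apply pow_lt; lra).
  assert (HB : 0 < B) by (apply pow_lt; lra).
  assert (HAB : 1 - INR (a + b) * d <= A * B) by (unfold A, B; rewrite <- pow_add; apply bernoulli_ineq; lra).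
  assert (Hq : (1 - c) / (1 + c) = 1 - 2 * c / (1 + c)) by (field; lra).
  assert (HAB2 : 2 * c / (1 + c) <= A * B) by lra.
  assert (HXA : X * A <= 1).
  { pose proof (one_plus_minus_pow_le1 d a ltac:(lra)). fold A in H. apply Rle_trans with ((1 + d) ^ a * A); [|lra].
    apply Rmult_le_compat_r; lra. }
  assert (HYp : 0 < Y) by lra.
  assert (HiY : / Y <= / B) by (apply Rinv_le_contravar; lra).
  assert (E1 : X * / Y * Z <= / A * / B * c).
  { assert (HXA' : X <= / A) by (apply Rmult_le_reg_r with A; [lra|]; rewrite Rinv_l; lra).
    assert (0 < / Y) by (apply Rinv_0_lt_compat; lra).
    apply Rmult_le_compat.
    - apply Rmult_le_pos; lra.
    - lra.
    - apply Rmult_le_compat; lra.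
    - lra. }
  destruct (Req_dec c 0) as [->|Hc0].
  - lra.
  - assert (0 < c) by lra.
    eapply Rle_trans; [exact E1|].
    assert (0 < A * B) by nra.
    replace (/ A * / B * c) with (c / (A * B)) by (field; lra).
    apply Rmult_le_reg_r with (A * B); [nra|].
    replace (c / (A * B) * (A * B)) with c by (field; lra).
    apply Rle_trans with ((1 + c) / 2 * (2 * c / (1 + c))).
    + right; field; lra.
    + apply Rmult_le_compat_l; lra.
Qed.

Lemma Cnorm_ratio U L p w n k :
  (1 + Z.of_nat (length L) - Z.of_nat (length U))%Z = Z.of_nat k ->
  Cnorm (phi_term U L p w (S n)) = Cnorm (phi_term U L p w n) *
    (Cnorm (qfactors U p n) * / Cnorm (qfactors (p :: L) p n) * (Cnorm p ^ n) ^ k * Cnorm w).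
Proof.
  intro Hk. rewrite (phi_term_succ U L p w n k Hk).
  rewrite !Cnorm_mul, Cnorm_inv, Cnorm_pow, Cnorm_opp, Cnorm_pow. ring.
Qed.

Lemma params_bounded (U V : list Cx) : exists M, 0 <= M /\
  (forall x, In x U -> Cnorm x <= M) /\ (forall x, In x V -> Cnorm x <= M).
Proof.
  exists (norm_sum U + norm_sum V).
  pose proof (norm_sum_ge0 U). pose proof (norm_sum_ge0 V).
  split; [lra | split]; intros x Hx.
  - pose proof (norm_sum_in U x Hx). lra.
  - pose proof (norm_sum_in V x Hx). lra.
Qed.

(* The ratio of the factor products tends to 1: eventually, multiplied by any [Z] in
   [0, c] with [c < 1], it stays below [(1 + c) / 2]. *)
Lemma qfactors_ratio_eventually_le (U V : list Cx) (P c : R) : 0 < P < 1 -> 0 <= c < 1 ->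
  exists N, forall n Z, (N <= n)%nat -> 0 <= Z <= c ->
    Cnorm (qfactors U (RtoC P) n) * / Cnorm (qfactors V (RtoC P) n) * Z <= (1 + c) / 2.
Proof.
  intros HP Hc. destruct (params_bounded U V) as [M [HM0 [HMU HMV]]].
  assert (Hp : Cnorm (RtoC P) = P) by (rewrite Cnorm_RtoC, Rabs_pos_eq; lra).
  set (a := length U). set (b := length V). set (m := Rmin (1/2) ((1 - c) / (1 + c))).
  assert (Hm : 0 < m) by (apply Rmin_glb_lt; [lra | apply Rdiv_lt_0_compat; lra]).
  assert (Hm1 : m <= 1/2) by apply Rmin_l.
  assert (Hm2 : m <= (1 - c) / (1 + c)) by apply Rmin_r.
  assert (HI : 0 <= INR (a + b)) by apply pos_INR.
  destruct (pow_small P (m / ((INR (a + b) + 1) * (M + 1))) HP) as [N HN].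
  { apply Rdiv_lt_0_compat; nra. }
  exists N. intros n Z Hn HZ. specialize (HN n Hn).
  assert (HPn : 0 <= P ^ n) by (apply pow_le; lra).
  assert (Hd : (INR (a + b) + 1) * (M * P ^ n) <= m).
  { apply Rle_trans with ((INR (a + b) + 1) * (M + 1) * P ^ n); [nra|].
    apply Rmult_le_reg_r with (/ ((INR (a + b) + 1) * (M + 1))).
    - apply Rinv_0_lt_compat; nra.
    - replace ((INR (a + b) + 1) * (M + 1) * P ^ n * / ((INR (a + b) + 1) * (M + 1)))
        with (P ^ n) by (field; nra). exact HN. }
  apply (ratio_upper_bound a b (M * P ^ n) c); try lra.
  - split; nra.
  - nra.
  - split; [apply Cnorm_ge0 |].
    pose proof (qfactors_upper U (RtoC P) n M HMU) as H. rewrite Hp in H. exact H.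
  - pose proof (qfactors_lower V (RtoC P) n M) as H. rewrite Hp in H. apply H; [nra | exact HMV].
Qed.

(* Eventually [(P^n)^k |w| <= c] for some [c < 1]: for [k >= 1] because [P^n -> 0],
   for [k = 0] because [|w| < 1]. *)
Lemma gaussian_factor_eventually_le (P : R) (w : Cx) (k : nat) : 0 < P < 1 ->
  ((1 <= k)%nat \/ Cnorm w < 1) ->
  exists c, 0 <= c < 1 /\ exists N, forall n, (N <= n)%nat -> (P ^ n) ^ k * Cnorm w <= c.
Proof.
  intros HP Hkw. pose proof (Cnorm_ge0 w).
  destruct k as [|k].
  - destruct Hkw as [Hk1 | Hw]; [lia |].
    exists (Cnorm w). split; [lra |]. exists O. intros n _. simpl. lra.
  - exists (1/2). split; [lra |].
    destruct (pow_small P (/ (2 * (Cnorm w + 1))) HP) as [N HN].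
    { apply Rinv_0_lt_compat; lra. }
    exists N. intros n Hn. specialize (HN n Hn).
    assert (0 <= P ^ n) by (apply pow_le; lra).
    assert (P ^ n <= 1) by (apply pow_le1; lra).
    assert (E : (P ^ n) ^ S k <= P ^ n).
    { simpl. assert ((P ^ n) ^ k <= 1) by (apply pow_le1; split; auto). nra. }
    assert (P ^ n * (2 * (Cnorm w + 1)) <= 1).
    { apply Rmult_le_reg_r with (/ (2 * (Cnorm w + 1))); [apply Rinv_0_lt_compat; lra |].
      rewrite Rmult_assoc, Rinv_r, Rmult_1_l, Rmult_1_r by lra. exact HN. }
    assert (0 <= (P ^ n) ^ S k) by (apply pow_le; auto).
    nra.
Qed.

(* Absolute convergence of phi for [0 < p < 1] when [k >= 1] (the Gaussian factor wins)
   or [|w| < 1]: ratio test, the factor ratio tending to 1. *)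
Lemma phi_abs_convergent U L (P : R) w k :
  0 < P < 1 -> (1 + Z.of_nat (length L) - Z.of_nat (length U))%Z = Z.of_nat k ->
  ((1 <= k)%nat \/ Cnorm w < 1) -> ex_series (fun n => Cnorm (phi_term U L (RtoC P) w n)).
Proof.
  intros HP Hk Hkw.
  destruct (gaussian_factor_eventually_le P w k HP Hkw) as [c [Hc [n1 Hn1]]].
  destruct (qfactors_ratio_eventually_le U (RtoC P :: L) P c HP Hc) as [n2 Hn2].
  apply (ratio_test _ (Nat.max n1 n2) ((1 + c) / 2)); [lra | intro; apply Cnorm_ge0 |].
  intros n Hn.
  rewrite (Cnorm_ratio U L (RtoC P) w n k Hk), Cnorm_RtoC, Rabs_pos_eq by lra.
  assert (HZ : 0 <= (P ^ n) ^ k * Cnorm w).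
  { apply Rmult_le_pos; [apply pow_le, pow_le; lra | apply Cnorm_ge0]. }
  pose proof (Hn2 n _ ltac:(lia) (conj HZ (Hn1 n ltac:(lia)))) as Hr.
  pose proof (Cnorm_ge0 (phi_term U L (RtoC P) w n)).
  rewrite Rmult_assoc in Hr. nra.
Qed.

Lemma ratio_lower_bound (a b : nat) d X Y W : 0 <= d <= 1/2 -> (1 - d) ^ a <= X -> 0 < Y <= (1 + d) ^ b -> 1 <= W ->
  1 - INR (a + b) * d <= X * / Y * W.
Proof.
  intros Hd HX HY HW.
  assert (B1 : (1 + d) ^ b * (1 - d) ^ b <= 1) by (apply one_plus_minus_pow_le1; lra).
  assert (Hb : 0 < (1 - d) ^ b) by (apply pow_lt; lra).
  assert (Ha : 0 < (1 - d) ^ a) by (apply pow_lt; lra).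
  assert (B2 : (1 - d) ^ b <= / Y).
  { apply Rmult_le_reg_l with Y; [lra|]. rewrite Rinv_r by lra. nra. }
  assert (B3 : 1 - INR (a + b) * d <= (1 - d) ^ a * (1 - d) ^ b) by (rewrite <- pow_add; apply bernoulli_ineq; lra).
  assert (B4 : (1 - d) ^ a * (1 - d) ^ b <= X * / Y) by (apply Rmult_le_compat; lra).
  assert (0 <= X * / Y) by nra.
  nra.
Qed.

Lemma phi_ratio_lower U L (P M : R) w n : 0 < P < 1 ->
  (1 + Z.of_nat (length L) - Z.of_nat (length U))%Z = Z.of_nat 0 -> 1 <= Cnorm w ->
  (forall x, In x U -> Cnorm x <= M) -> (forall x, In x (RtoC P :: L) -> Cnorm x <= M) ->
  0 <= M * P ^ n <= 1/2 -> qfactors (RtoC P :: L) (RtoC P) n <> C0 ->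
  Cnorm (phi_term U L (RtoC P) w n) * (1 - INR (length U + length (RtoC P :: L)) * (M * P ^ n))
    <= Cnorm (phi_term U L (RtoC P) w (S n)).
Proof.
  intros HP Hk Hw HMU HML Hd Hnz.
  assert (Hp : Cnorm (RtoC P) = P) by (rewrite Cnorm_RtoC, Rabs_pos_eq; lra).
  rewrite (Cnorm_ratio U L (RtoC P) w n 0 Hk), Hp, pow_O, Rmult_1_r.
  apply Rmult_le_compat_l; [apply Cnorm_ge0 |].
  apply ratio_lower_bound; auto.
  - pose proof (qfactors_lower U (RtoC P) n M) as H. rewrite Hp in H. apply H; [lra | exact HMU].
  - split; [apply Cnorm_gt0; auto |].
    pose proof (qfactors_upper (RtoC P :: L) (RtoC P) n M HML) as H. rewrite Hp in H. exact H.
Qed.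

(* Inductive step of the lower bound [|t (n0 + j)| >= |t n0| (1 - K (1 - P^j))]. *)
Lemma lower_bound_step K P u T A r : 0 <= K <= 1/2 -> 0 < P < 1 -> 0 <= u <= 1 -> 0 <= T ->
  T * (1 - K * (1 - u)) <= A -> 1 - K * (1 - P) * u <= r -> T * (1 - K * (1 - P * u)) <= A * r.
Proof.
  intros HK HP Hu HT HA Hr.
  assert (H1 : 0 <= (1 - P) * u <= 1) by (split; [apply Rmult_le_pos; lra| nra]).
  assert (H2 : K * ((1 - P) * u) <= K * 1) by (apply Rmult_le_compat_l; lra).
  assert (0 <= 1 - K * (1 - P) * u) by (rewrite Rmult_assoc; lra).
  assert (H3 : K * (1 - u) <= K) by (assert (1 - u <= 1) by lra; assert (0 <= 1 - u) by lra; nra).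
  assert (0 <= 1 - K * (1 - u)) by lra.
  assert (E : T * (1 - K * (1 - u)) * (1 - K * (1 - P) * u) <= A * r).
  { apply Rmult_le_compat; auto. apply Rmult_le_pos; auto. }
  assert (T * (1 - K * (1 - P * u)) <= T * (1 - K * (1 - u)) * (1 - K * (1 - P) * u)).
  { rewrite Rmult_assoc. apply Rmult_le_compat_l; auto.
    assert (0 <= K * (1 - u) * K * (1 - P) * u).
    { repeat apply Rmult_le_pos; lra. }
    nra. }
  lra.
Qed.

Lemma geometric_tail_small (P A : R) : 0 < P < 1 -> 0 <= A ->
  exists n0, 0 <= A * P ^ n0 / (1 - P) <= 1/2.
Proof.
  intros HP HA.
  destruct (pow_small P ((1 - P) / (2 * (A + 1))) HP) as [n0 Hn0].
  { apply Rdiv_lt_0_compat; lra. }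
  specialize (Hn0 n0 (le_n _)). exists n0.
  assert (HPn0 : 0 < P ^ n0) by (apply pow_lt; lra).
  assert (Hsmall : A * P ^ n0 <= (1 - P) / 2).
  { apply Rle_trans with (A * ((1 - P) / (2 * (A + 1)))); [apply Rmult_le_compat_l; lra |].
    apply Rmult_le_reg_r with (2 * (A + 1)); [lra |].
    replace (A * ((1 - P) / (2 * (A + 1))) * (2 * (A + 1))) with (A * (1 - P)) by (field; lra).
    replace ((1 - P) / 2 * (2 * (A + 1))) with ((1 - P) * (A + 1)) by field.
    nra. }
  split.
  - apply Rmult_le_pos; [apply Rmult_le_pos; lra | left; apply Rinv_0_lt_compat; lra].
  - apply Rmult_le_reg_r with (1 - P); [lra |]. unfold Rdiv.
    rewrite Rmult_assoc, Rinv_l, Rmult_1_r by lra. lra.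
Qed.

(* Consequently, for [k = 0] and [|w| >= 1] the terms stay above half of the [n0]-th term
   from some [n0] on (the product of the ratio bounds converges). *)
Lemma phi_terms_eventually_large U L (P : R) w : 0 < P < 1 ->
  (1 + Z.of_nat (length L) - Z.of_nat (length U))%Z = Z.of_nat 0 -> 1 <= Cnorm w ->
  (forall n, qfactors (RtoC P :: L) (RtoC P) n <> C0) ->
  exists n0, forall j, Cnorm (phi_term U L (RtoC P) w n0) / 2
                       <= Cnorm (phi_term U L (RtoC P) w (n0 + j)).
Proof.
  intros HP Hk Hw HL. set (t := phi_term U L (RtoC P) w).
  destruct (params_bounded U (RtoC P :: L)) as [M [HM0 [HMU HML]]].
  set (Nn := INR (length U + length (RtoC P :: L))).
  assert (HNn : 1 <= Nn).
  { unfold Nn. rewrite plus_INR. simpl length. rewrite S_INR.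
    pose proof (pos_INR (length U)). pose proof (pos_INR (length L)). lra. }
  assert (HNM : 0 <= Nn * M) by nra.
  destruct (geometric_tail_small P (Nn * M) HP HNM) as [n0 HK].
  set (K := Nn * M * P ^ n0 / (1 - P)) in HK.
  exists n0. set (t0 := Cnorm (t n0)).
  assert (Low : forall j, t0 * (1 - K * (1 - P ^ j)) <= Cnorm (t (n0 + j)%nat)).
  { induction j as [|j IH].
    - rewrite Nat.add_0_r. simpl. unfold t0. lra.
    - replace (n0 + S j)%nat with (S (n0 + j)) by lia.
      assert (HPj : 0 < P ^ j <= 1) by (split; [apply pow_lt | apply pow_le1]; lra).
      assert (Hd : Nn * (M * P ^ (n0 + j)) = K * (1 - P) * P ^ j).
      { unfold K. rewrite pow_add. field. lra. }
      assert (Hd1 : 0 <= M * P ^ (n0 + j) <= 1/2).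
      { split; [apply Rmult_le_pos; [lra | apply pow_le; lra] |].
        assert (K * (1 - P) * P ^ j <= 1/2) by (assert (0 <= K * (1 - P)) by nra; nra). nra. }
      pose proof (phi_ratio_lower U L P M w (n0 + j) HP Hk Hw HMU HML Hd1 (HL _)) as Hr.
      fold Nn t in Hr. rewrite Hd in Hr.
      eapply Rle_trans; [| exact Hr]. simpl pow.
      apply lower_bound_step; auto; try lra. apply Cnorm_ge0. }
  intro j. specialize (Low j).
  assert (P ^ j <= 1) by (apply pow_le1; lra). assert (0 <= P ^ j) by (apply pow_le; lra).
  assert (0 <= t0) by apply Cnorm_ge0.
  assert (1/2 <= 1 - K * (1 - P ^ j)) by nra. fold t. nra.
Qed.

Lemma phi_term_neq0 U L p w k :
  (1 + Z.of_nat (length L) - Z.of_nat (length U))%Z = Z.of_nat k -> p <> C0 -> w <> C0 ->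
  (forall n, qfactors U p n <> C0) -> (forall n, qfactors (p :: L) p n <> C0) ->
  forall n, phi_term U L p w n <> C0.
Proof.
  intros Hk Hp Hw HU HL n. induction n as [|n IH].
  - rewrite phi_term_0. exact C1_neq_C0.
  - rewrite (phi_term_succ U L p w n k Hk).
    apply Cmul_neq0; [exact IH |].
    apply Cmul_neq0; apply Cmul_neq0; auto using Cinv_neq0.
    apply Cpow_neq0. intro E. apply (Cpow_neq0 p n Hp).
    replace (Cpow p n) with (Copp (Copp (Cpow p n))) by ring. rewrite E. ring.
Qed.

(* For [k = 0] and nonvanishing factors, convergence of phi forces [|w| < 1]: otherwise
   the terms would not tend to 0. *)
Lemma phi_convergent_norm_lt1 U L (P : R) w :
  0 < P < 1 -> (1 + Z.of_nat (length L) - Z.of_nat (length U))%Z = Z.of_nat 0 ->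
  (forall n, qfactors U (RtoC P) n <> C0) -> (forall n, qfactors (RtoC P :: L) (RtoC P) n <> C0) ->
  phi_converges U L (RtoC P) w -> Cnorm w < 1.
Proof.
  intros HP Hk HU HL [l Hl].
  destruct (Rlt_le_dec (Cnorm w) 1) as [| Hw]; auto. exfalso.
  assert (Hw0 : w <> C0) by (intro E; rewrite E, Cnorm_C0 in Hw; lra).
  assert (Hp0 : RtoC P <> C0) by (apply RtoC_neq0; lra).
  destruct (phi_terms_eventually_large U L P w HP Hk Hw HL) as [n0 Hn0].
  set (t0 := Cnorm (phi_term U L (RtoC P) w n0)) in Hn0.
  assert (Ht0 : 0 < t0) by (apply Cnorm_gt0, (phi_term_neq0 U L _ w 0); auto).
  destruct (series_cv_terms_to0 _ _ Hl (t0 / 2) ltac:(lra)) as [N HN].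
  specialize (HN (n0 + N)%nat ltac:(lia)). specialize (Hn0 N). lra.
Qed.

Lemma qfactor_nz (Q : R) (x : Cx) n : 1 < Q -> x <> RtoC (Q ^ n) ->
  Csub C1 (Cmul x (Cpow (RtoC (/ Q)) n)) <> C0.
Proof.
  intros HQ Hx E. apply Hx.
  rewrite <- Cpow_RtoC. rewrite RtoC_inv, Cpow_inv in E.
  assert (Cpow (RtoC Q) n <> C0) by (apply Cpow_neq0, RtoC_neq0; lra).
  transitivity (Csub (Cpow (RtoC Q) n) (Cmul (Cpow (RtoC Q) n) (Csub C1 (Cmul x (Cinv (Cpow (RtoC Q) n)))))).
  - field. auto.
  - rewrite E. unfold Csub; field.
Qed.

Lemma qfactors_nz (Q : R) (l : list Cx) n : 1 < Q ->
  (forall x, In x l -> x <> RtoC (Q ^ n)) -> qfactors l (RtoC (/ Q)) n <> C0.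
Proof. intros HQ Hl. apply qfactors_neq0. intros x Hx. apply qfactor_nz; auto. Qed.

Lemma inv_not_qpow (Q : R) n : 1 < Q -> RtoC (/ Q) <> RtoC (Q ^ n).
Proof.
  intros HQ E. injection E as E.
  assert (1 < Q ^ S n) by (apply Rlt_pow_R1; [lra | lia]).
  simpl in H. rewrite <- E, Rinv_r in H by lra. lra.
Qed.

(* In the borderline case [k = 0] the series is not automatically convergent; when no
   q-Pochhammer factor vanishes, its convergence forces [|w| < 1], hence absolute convergence. *)
Lemma phi_abs_convergent_k0 (U L : list Cx) (Q : R) (w : Cx) : 1 < Q ->
  (1 + Z.of_nat (length L) - Z.of_nat (length U))%Z = Z.of_nat 0 ->
  (forall x, In x U -> forall n, x <> RtoC (Q ^ n)) ->
  (forall x, In x L -> forall n, x <> RtoC (Q ^ n)) ->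
  phi_converges U L (RtoC (/ Q)) w ->
  ex_series (fun n => Cnorm (phi_term U L (RtoC (/ Q)) w n)).
Proof.
  intros HQ Hk HU HL Hcv.
  assert (HP : 0 < / Q < 1).
  { split; [apply Rinv_0_lt_compat; lra|]. rewrite <- Rinv_1. apply Rinv_lt_contravar; lra. }
  apply (phi_abs_convergent U L (/ Q) w 0 HP Hk). right.
  apply (phi_convergent_norm_lt1 U L (/ Q) w HP Hk); [| | exact Hcv].
  - intro n. apply qfactors_nz; [exact HQ|]. intros x Hx. apply HU, Hx.
  - intro n. apply qfactors_nz; [exact HQ|]. intros x [<- | Hx]; [apply inv_not_qpow; auto | apply HL, Hx].
Qed.

(* At the node [Q^n x], the theta quotient and the theta denominator of the transform
   combine into a constant times the n-th theta term at [v = a1 z / x]. *)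
Lemma qLaplace_term_factor (Q : R) (x c a1 z y0 : Cx) (Phi : Cx) (n : Z) :
  1 < Q -> x <> C0 -> c <> C0 -> a1 <> C0 -> z <> C0 -> y0 <> C0 ->
  Theta Q y0 <> C0 ->
  y0 = Cmul (RtoC Q) (Cinv (Cdiv z x)) ->
  Cdiv (Cmul (Cdiv (Theta Q (Cmul c (Cmul a1 (Cmul (RtoC (powerRZ Q n)) x))))
                   (Theta Q (Cmul c (Cmul (RtoC (powerRZ Q n)) x)))) Phi)
       (Theta Q (Cmul (RtoC (powerRZ Q n)) y0)) =
  Cmul (Cdiv (Theta Q (Cmul c (Cmul a1 x))) (Cmul (Theta Q (Cmul c x)) (Theta Q y0)))
       (Cmul (theta_term Q (Cdiv (Cmul a1 z) x) n) Phi).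
Proof.
  intros HQ Hx Hc Ha Hz Hy0 Hty0 Ey0.
  assert (HQ0 : 0 < Q) by lra.
  assert (Hcax : Cmul c (Cmul a1 x) <> C0) by (repeat apply Cmul_neq0; auto).
  assert (Hcx0 : Cmul c x <> C0) by (repeat apply Cmul_neq0; auto).
  replace (Cmul c (Cmul a1 (Cmul (RtoC (powerRZ Q n)) x))) with (Cmul (RtoC (powerRZ Q n)) (Cmul c (Cmul a1 x))) by ring.
  replace (Cmul c (Cmul (RtoC (powerRZ Q n)) x)) with (Cmul (RtoC (powerRZ Q n)) (Cmul c x)) by ring.
  rewrite !theta_shift by auto.
  rewrite theta_term_eq.
  assert (Ev : Cdiv (Cmul a1 z) x = Cmul (Cmul a1 (RtoC Q)) (Cinv y0)).
  { rewrite Ey0. unfold Cdiv. field. split; auto. split; auto. apply RtoC_neq0; lra. }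
  rewrite Ev, !Cpowz_mul_l, Cpowz_inv, Cpowz_RtoC.
  assert (EZ : (- ztri n = - ztri (n - 1) + - n)%Z).
  { pose proof (ztri_succ (n - 1)). replace (n - 1 + 1)%Z with n in H by ring. lia. }
  rewrite EZ, RtoC_powerRZ_add, !RtoC_powerRZ_opp by auto.
  assert (A1 : RtoC (powerRZ Q (ztri (n - 1))) <> C0) by (apply RtoC_powerRZ_neq0; auto).
  assert (A2 : RtoC (powerRZ Q n) <> C0) by (apply RtoC_powerRZ_neq0; auto).
  assert (A3 : Cpowz c n <> C0) by (apply Cpowz_neq0; auto).
  assert (A4 : Cpowz x n <> C0) by (apply Cpowz_neq0; auto).
  assert (A5 : Cpowz y0 n <> C0) by (apply Cpowz_neq0; auto).
  assert (A6 : Cpowz a1 n <> C0) by (apply Cpowz_neq0; auto).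
  replace (Cpowz (RtoC Q) n) with (RtoC (powerRZ Q n)) by (rewrite Cpowz_RtoC; reflexivity).
  rewrite ?Cpowz_mul_l.
  unfold Cdiv. rewrite !Cinv_mul.
  set (T := Cinv (Theta Q (Cmul c x))). field. repeat split; auto.
Qed.

(* Multiplying the m-th power of [al/(Q^n x)] by a theta term at [v] gives the theta term
   at [Q^-m v]: this turns the transform into the double series. *)
Lemma theta_term_rescale (Q : R) (C al x v : Cx) (n : Z) (m : nat) : 1 < Q -> x <> C0 ->
  Cmul (theta_term Q v n) (Cmul C (Cpow (Cdiv al (Cmul (RtoC (powerRZ Q n)) x)) m)) =
  Cmul (Cmul C (Cpow (Cdiv al x) m)) (theta_term Q (Cmul (RtoC (powerRZ Q (- Z.of_nat m))) v) n).
Proof.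
  intros HQ Hx. rewrite !theta_term_eq, Cpowz_mul_l, Cpowz_Cpowz_RtoC by lra.
  unfold Cdiv. rewrite !Cpow_mul_l, !Cinv_mul, !Cpow_mul_l, !Cpow_inv, Cpow_RtoC.
  rewrite pow_powerRZ, powerRZ_powerRZ by (pose proof (powerRZ_lt Q n ltac:(lra)); lra).
  replace (- Z.of_nat m * n)%Z with (- (n * Z.of_nat m))%Z by ring.
  rewrite (RtoC_powerRZ_opp Q (n * Z.of_nat m)). ring.
Qed.

Lemma half_tri_double m : (2 * (m * (m - 1) / 2) = m * (m - 1))%nat.
Proof.
  induction m; [reflexivity|].
  rewrite half_tri_succ. destruct m; [reflexivity|].
  replace (S (S m) * (S (S m) - 1))%nat with (S m * (S m - 1) + 2 * S m)%nat by (simpl; nia).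
  lia.
Qed.

(* Relates the nat exponent [m(m-1)/2] of [qsign] to the triangular exponent of theta. *)
Lemma half_tri_ztri m : (Z.of_nat (m * (m - 1) / 2) + Z.of_nat m = ztri (- Z.of_nat m - 1))%Z.
Proof.
  pose proof (half_tri_double m) as H. pose proof (ztri_double (- Z.of_nat m - 1)) as H2.
  apply (f_equal Z.of_nat) in H. rewrite Nat2Z.inj_mul in H.
  destruct m.
  - reflexivity.
  - rewrite Nat2Z.inj_mul in H. replace (Z.of_nat (S m - 1)) with (Z.of_nat m) in H by (f_equal; lia).
    rewrite Nat2Z.inj_succ in *. nia.
Qed.

(* Coefficient identity: the row sums of the double series are the terms of
   [phi(U, 0; L; 1/Q; w)] (one Gaussian factor is absorbed by the theta shift). *)
Lemma target_term_identity (Q : R) (al x a1 z : Cx) (k m : nat) :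
  1 < Q -> x <> C0 -> a1 <> C0 -> z <> C0 -> (1 <= k)%nat ->
  Cmul (Cpow (qsign (RtoC (/ Q)) m) k)
    (Cmul (Cpow (Cdiv al x) m)
       (Cmul (RtoC (powerRZ Q (ztri (- Z.of_nat m - 1)))) (Cpowz (Cdiv (Cmul a1 z) x) (- Z.of_nat m)))) =
  Cmul (Cpow (qsign (RtoC (/ Q)) m) (k - 1)) (Cpow (Copp (Cdiv al (Cmul (Cmul a1 (RtoC (/ Q))) z))) m).
Proof.
  intros HQ Hx Ha Hz Hk.
  replace k with (S (k - 1)) at 1 by lia. rewrite Cpow_S.
  rewrite Cpowz_opp, Cpowz_nat.
  rewrite <- half_tri_ztri, RtoC_powerRZ_add by lra.
  unfold qsign. rewrite <- !pow_powerRZ, <- !Cpow_RtoC, !RtoC_inv, !Cpow_inv.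
  replace (Copp (Cdiv al (Cmul (Cmul a1 (Cinv (RtoC Q))) z))) with
    (Cmul (RtoC (-1)) (Cmul al (Cmul (Cinv a1) (Cmul (RtoC Q) (Cinv z))))).
  2:{ unfold Cdiv. rewrite !Cinv_mul, Cinv_inv.
      unfold RtoC, Copp, Cmul; apply Cx_ext; simpl; ring. }
  unfold Cdiv. rewrite !Cpow_mul_l, !Cpow_inv, !Cinv_mul.
  assert (Cpow x m <> C0) by (apply Cpow_neq0; auto).
  assert (Cpow a1 m <> C0) by (apply Cpow_neq0; auto).
  assert (Cpow z m <> C0) by (apply Cpow_neq0; auto).
  assert (Cpow (RtoC Q) m <> C0) by (apply Cpow_neq0, RtoC_neq0; lra).
  assert (Cpow (RtoC Q) (m * (m - 1) / 2) <> C0) by (apply Cpow_neq0, RtoC_neq0; lra).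
  rewrite !Cinv_inv.
  assert (Cpow (Cpow (RtoC Q) (m * (m - 1) / 2)) (k - 1) <> C0) by (apply Cpow_neq0; auto).
  field. repeat split; auto.
Qed.

Lemma theta_abs_rescale Q v m : 1 < Q -> v <> C0 ->
  fst (Theta Q (RtoC (Cnorm (Cmul (RtoC (powerRZ Q (- Z.of_nat m))) v)))) =
  powerRZ Q (ztri (- Z.of_nat m - 1)) * powerRZ (Cnorm v) (- Z.of_nat m) * fst (Theta Q (RtoC (Cnorm v))).
Proof.
  intros HQ Hv.
  rewrite Cnorm_mul, Cnorm_RtoC, Rabs_pos_eq by (left; apply powerRZ_lt; lra).
  rewrite RtoC_mul, theta_shift; auto.
  2:{ apply RtoC_neq0. pose proof (Cnorm_gt0 v Hv); lra. }
  rewrite Cpowz_RtoC. simpl. ring.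
Qed.

(* Absolute summability of either half (n >= 0 or n < 0) of the double series, dominated
   through [theta_halves_bound] by [|target term| * Theta |v|]. *)
Lemma half_double_series_summable (Q : R) (E : nat -> Cx) (ym : nat -> Cx) (v : Cx) (tp : nat -> Cx) (idx : nat -> Z) :
  1 < Q -> v <> C0 -> (forall m, ym m = Cmul (RtoC (powerRZ Q (- Z.of_nat m))) v) ->
  (forall m, Cmul (E m) (Cmul (RtoC (powerRZ Q (ztri (- Z.of_nat m - 1)))) (Cpowz v (- Z.of_nat m))) = tp m) ->
  ex_series (fun m => Cnorm (tp m)) ->
  (forall y, y <> C0 -> ex_series (fun n => Cnorm (theta_term Q y (idx n))) /\
      Series (fun n => Cnorm (theta_term Q y (idx n))) <= fst (Theta Q (RtoC (Cnorm y)))) ->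
  (forall m, ex_series (fun n => Cnorm (Cmul (E m) (theta_term Q (ym m) (idx n))))) /\
  ex_series (fun m => Series (fun n => Cnorm (Cmul (E m) (theta_term Q (ym m) (idx n))))).
Proof.
  intros HQ Hv Hym HE Htp Hth.
  assert (Hy : forall m, ym m <> C0).
  { intro m. rewrite Hym. apply Cmul_neq0; auto. apply RtoC_powerRZ_neq0; lra. }
  assert (S1 : forall m, is_series (fun n => Cnorm (Cmul (E m) (theta_term Q (ym m) (idx n))))
                  (Cnorm (E m) * Series (fun n => Cnorm (theta_term Q (ym m) (idx n))))).
  { intro m. destruct (Hth (ym m) (Hy m)) as [Ex _].
    apply (is_series_ext (fun n => Cnorm (E m) * Cnorm (theta_term Q (ym m) (idx n)))).
    - intro n. rewrite Cnorm_mul. reflexivity.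
    - apply (is_series_scal_l (Cnorm (E m)) (fun n => Cnorm (theta_term Q (ym m) (idx n)))).
      apply Series_correct; auto. }
  split.
  - intro m. eexists; apply S1.
  - set (thv := fst (Theta Q (RtoC (Cnorm v)))).
    apply (@ex_series_le R_AbsRing R_CompleteNormedModule _ (fun m => Cnorm (tp m) * thv)).
    + intro m. rewrite (is_series_unique _ _ (S1 m)).
      change (norm (Cnorm (E m) * Series (fun n => Cnorm (theta_term Q (ym m) (idx n)))))
        with (Rabs (Cnorm (E m) * Series (fun n => Cnorm (theta_term Q (ym m) (idx n))))).
      destruct (Hth (ym m) (Hy m)) as [Ex Bd].
      assert (0 <= Series (fun n => Cnorm (theta_term Q (ym m) (idx n)))) by (apply Series_ge0; auto; intro; apply Cnorm_ge0).
      pose proof (Cnorm_ge0 (E m)).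
      rewrite Rabs_pos_eq by (apply Rmult_le_pos; auto).
      eapply Rle_trans; [apply Rmult_le_compat_l; [auto| exact Bd]|].
      rewrite Hym, theta_abs_rescale by auto. fold thv.
      rewrite <- (HE m), !Cnorm_mul, Cnorm_RtoC, Cnorm_powz, Rabs_pos_eq by (left; apply powerRZ_lt; lra).
      right; ring.
    + destruct Htp as [l Hl]. pose proof (is_series_scal_l thv _ _ Hl) as Hs.
      eexists. eapply is_series_ext; [|exact Hs]. intro m. cbv beta.
      apply Rmult_comm.
Qed.

(* The double series [sum_(m,n) E m * theta_term Q (Q^-m v) n] whose two iterated sums give,
   respectively, the q-Laplace transform and the theta-factor times the target series. *)
Definition theta_double_term (Q : R) (E : nat -> Cx) (v : Cx) (m : nat) (n : Z) : Cx :=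
  Cmul (E m) (theta_term Q (Cmul (RtoC (powerRZ Q (- Z.of_nat m))) v) n).

(* Row [m] of the double series sums to its coefficient times [Theta Q (Q^-m v)], which the
   functional equation rewrites as a multiple of [Theta Q v]. *)
Lemma theta_double_row (Q : R) (E : nat -> Cx) (v : Cx) (m : nat) : 1 < Q -> v <> C0 ->
  bseries_cv (theta_double_term Q E v m)
    (Cmul (Cmul (E m) (Cmul (RtoC (powerRZ Q (ztri (- Z.of_nat m - 1)))) (Cpowz v (- Z.of_nat m))))
          (Theta Q v)).
Proof.
  intros HQ Hv.
  assert (Hym : Cmul (RtoC (powerRZ Q (- Z.of_nat m))) v <> C0).
  { apply Cmul_neq0; auto. apply RtoC_powerRZ_neq0; lra. }
  pose proof (bseries_cv_scal (E m) _ _ (theta_cv Q _ HQ Hym)) as H.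
  rewrite theta_shift in H by auto. rewrite <- Cmul_assoc. exact H.
Qed.

(* Interchange of summation: row [m] sums to [t m * Theta v] (functional equation of Theta),
   and absolute summability of [t] makes the whole double series absolutely summable. *)
Lemma theta_interchange (Q : R) (E : nat -> Cx) (v : Cx) (t : nat -> Cx) (T : Cx) :
  1 < Q -> v <> C0 ->
  (forall m, Cmul (E m) (Cmul (RtoC (powerRZ Q (ztri (- Z.of_nat m - 1))))
                              (Cpowz v (- Z.of_nat m))) = t m) ->
  ex_series (fun m => Cnorm (t m)) -> series_cv t T ->
  (forall n, series_cv (fun m => theta_double_term Q E v m n)
                       (csum (fun m => theta_double_term Q E v m n))) /\
  bseries_cv (fun n => csum (fun m => theta_double_term Q E v m n)) (Cmul (Theta Q v) T).
Proof.
  intros HQ Hv Ht Habs HT. set (G := theta_double_term Q E v).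
  set (ym := fun m : nat => Cmul (RtoC (powerRZ Q (- Z.of_nat m))) v).
  assert (Hrow : forall m, bseries_cv (G m) (Cmul (t m) (Theta Q v))).
  { intro m. rewrite <- Ht. apply theta_double_row; auto. }
  pose proof (half_double_series_summable Q E ym v t (fun n => Z.of_nat n) HQ Hv
     (fun m => eq_refl) Ht Habs
     (fun y Hy => conj (theta_pos_half Q y HQ Hy) (proj1 (theta_halves_bound Q y HQ Hy))))
    as [Dp1 Dp2].
  pose proof (half_double_series_summable Q E ym v t (fun n => (- Z.of_nat (S n))%Z) HQ Hv
     (fun m => eq_refl) Ht Habs
     (fun y Hy => conj (theta_neg_half Q y HQ Hy) (proj2 (theta_halves_bound Q y HQ Hy))))
    as [Dn1 Dn2].
  destruct (fubini_C (fun m n => G m (Z.of_nat n)) Dp1 Dp2)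
    as [Fp [Hp [HFp [HHp [Lp [HLp1 HLp2]]]]]].
  destruct (fubini_C (fun m n => G m (- Z.of_nat (S n))%Z) Dn1 Dn2)
    as [Fn [Hn [HFn [HHn [Ln [HLn1 HLn2]]]]]].
  assert (Hpos : forall k, csum (fun m => G m (Z.of_nat k)) = Fp k).
  { intro k. apply csum_spec, HFp. }
  assert (Hneg : forall k, csum (fun m => G m (- Z.of_nat (S k))%Z) = Fn k).
  { intro k. apply csum_spec, HFn. }
  split.
  - intro n. destruct (Z_le_gt_dec 0 n) as [Hn0|Hn0].
    + destruct (Z_of_nat_complete _ Hn0) as [k ->]. rewrite Hpos. apply HFp.
    + replace n with (- Z.of_nat (S (Z.to_nat (- n - 1))))%Z by lia.
      rewrite Hneg. apply HFn.
  - assert (HL : Cadd Lp Ln = Cmul (Theta Q v) T).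
    { apply (series_cv_unique (fun m => Cadd (Hp m) (Hn m))); [apply series_cv_add; auto|].
      eapply series_cv_ext; [|exact (series_cv_scal (Theta Q v) _ _ HT)].
      intro m. cbv beta. rewrite Cmul_comm. symmetry. apply (bseries_cv_unique (G m)); [|apply Hrow].
      exists (Hp m), (Hn m). auto. }
    exists Lp, Ln. split; [|split; [|symmetry; exact HL]].
    + eapply series_cv_ext; [|exact HLp1]. intro k. symmetry. apply Hpos.
    + eapply series_cv_ext; [|exact HLn1]. intro k. symmetry. apply Hneg.
Qed.

(* The nodes of the transform are [zeta_n = Q^n lam], [lam = (Q - 1) e^(id)], and the n-th
   theta denominator is evaluated at [Q^n y0], [y0 = Q lam / z]. *)
Lemma qLaplace_term_nodes (Q d : R) (f : Cx -> Cx) (z : Cx) (n : Z) : 1 < Q -> z <> C0 ->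
  qLaplace_term Q d f z n =
  Cdiv (f (Cmul (RtoC (powerRZ Q n)) (Cmul (RtoC (Q - 1)) (Cexpi d))))
       (Theta Q (Cmul (RtoC (powerRZ Q n))
                      (Cmul (RtoC Q) (Cinv (Cdiv z (Cmul (RtoC (Q - 1)) (Cexpi d))))))).
Proof.
  intros HQ Hz. unfold qLaplace_term.
  assert (He : Cexpi d <> C0) by (intro E; pose proof (Cnorm_expi d); rewrite E, Cnorm_C0 in H; lra).
  assert (RtoC (Q - 1) <> C0) by (apply RtoC_neq0; lra).
  rewrite powerRZ_add by lra. simpl powerRZ. rewrite !RtoC_mul, RtoC_1.
  f_equal; [f_equal; ring |]. f_equal. unfold Cdiv. field. repeat split; auto.
Qed.

Definition transform_coef (U L : list Cx) (Q : R) (k : nat) (al lam : Cx) (m : nat) : Cx :=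
  Cmul (Cmul (phi_coef U L (RtoC (/ Q)) m) (Cpow (qsign (RtoC (/ Q)) m) k)) (Cpow (Cdiv al lam) m).

Lemma phi_term_at_node (U L : list Cx) (Q : R) (k : nat) (al lam v : Cx) (n : Z) (m : nat) :
  1 < Q -> lam <> C0 -> (1 + Z.of_nat (length L) - Z.of_nat (length U))%Z = Z.of_nat k ->
  Cmul (theta_term Q v n) (phi_term U L (RtoC (/ Q)) (Cdiv al (Cmul (RtoC (powerRZ Q n)) lam)) m)
  = theta_double_term Q (transform_coef U L Q k al lam) v m n.
Proof.
  intros HQ Hlam HkL. rewrite (phi_term_eq _ _ _ _ _ k HkL), (Cmul_assoc (phi_coef _ _ _ m)).
  apply theta_term_rescale; auto.
Qed.

(* Summed over n, row m of the double series is the m-th term of [phi(U, 0; L; 1/Q; w)]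
   (up to the factor [Theta v]); this is where the extra upper parameter 0 comes from. *)
Lemma transform_coef_row (U L : list Cx) (Q : R) (k : nat) (al lam a1 z : Cx) (m : nat) :
  1 < Q -> (1 <= k)%nat -> lam <> C0 -> a1 <> C0 -> z <> C0 ->
  (1 + Z.of_nat (length L) - Z.of_nat (length U))%Z = Z.of_nat k ->
  Cmul (transform_coef U L Q k al lam m)
       (Cmul (RtoC (powerRZ Q (ztri (- Z.of_nat m - 1)))) (Cpowz (Cdiv (Cmul a1 z) lam) (- Z.of_nat m)))
  = phi_term (U ++ C0 :: nil) L (RtoC (/ Q)) (Copp (Cdiv al (Cmul (Cmul a1 (RtoC (/ Q))) z))) m.
Proof.
  intros HQ Hk Hlam Ha1 Hz HkL.
  assert (HkR : (1 + Z.of_nat (length L) - Z.of_nat (length (U ++ C0 :: nil)))%Z = Z.of_nat (k - 1)).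
  { rewrite length_app. simpl length. lia. }
  rewrite (phi_term_eq _ _ _ _ _ (k - 1) HkR), phi_coef_app0.
  rewrite <- (target_term_identity Q al lam a1 z k m) by auto.
  unfold transform_coef. ring.
Qed.

(* At each node, the term
   of the transform is a constant [R0] times a column sum of the double series. *)
Lemma qLaplace_theta_phi (Q d : R) (U L : list Cx) (k : nat) (c a1 al z : Cx) :
  1 < Q -> (1 <= k)%nat ->
  (1 + Z.of_nat (length L) - Z.of_nat (length U))%Z = Z.of_nat k ->
  c <> C0 -> a1 <> C0 -> z <> C0 ->
  Theta Q (Cdiv z (Cmul (RtoC (Q - 1)) (Cexpi d))) <> C0 ->
  ex_series (fun m => Cnorm (phi_term (U ++ C0 :: nil) L (RtoC (/ Q))
                        (Copp (Cdiv al (Cmul (Cmul a1 (RtoC (/ Q))) z))) m)) ->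
  bseries_cv
    (qLaplace_term Q d (fun zeta => Cmul (Cdiv (Theta Q (Cmul c (Cmul a1 zeta))) (Theta Q (Cmul c zeta)))
                                         (phi U L (RtoC (/ Q)) (Cdiv al zeta))) z)
    (Cmul (Cmul (Cdiv (Theta Q (Cmul c (Cmul a1 (Cmul (RtoC (Q - 1)) (Cexpi d)))))
                      (Theta Q (Cmul c (Cmul (RtoC (Q - 1)) (Cexpi d)))))
                (Cdiv (Theta Q (Cdiv (Cmul a1 z) (Cmul (RtoC (Q - 1)) (Cexpi d))))
                      (Theta Q (Cdiv z (Cmul (RtoC (Q - 1)) (Cexpi d))))))
          (phi (U ++ C0 :: nil) L (RtoC (/ Q)) (Copp (Cdiv al (Cmul (Cmul a1 (RtoC (/ Q))) z))))).
Proof.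
  set (lam := Cmul (RtoC (Q - 1)) (Cexpi d)).
  set (w := Copp (Cdiv al (Cmul (Cmul a1 (RtoC (/ Q))) z))).
  intros HQ Hk HkL Hc Ha1 Hz HD Habs.
  assert (He : Cexpi d <> C0) by (intro E; pose proof (Cnorm_expi d); rewrite E, Cnorm_C0 in H; lra).
  assert (Hlam : lam <> C0) by (apply Cmul_neq0; auto; apply RtoC_neq0; lra).
  set (v := Cdiv (Cmul a1 z) lam).
  assert (Hv : v <> C0) by (unfold v, Cdiv; repeat apply Cmul_neq0; auto using Cinv_neq0).
  set (y0 := Cmul (RtoC Q) (Cinv (Cdiv z lam))).
  assert (Hzl : Cdiv z lam <> C0) by (unfold Cdiv; apply Cmul_neq0; auto using Cinv_neq0).
  assert (Hy0 : y0 <> C0) by (apply Cmul_neq0; [apply RtoC_neq0; lra | apply Cinv_neq0; auto]).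
  assert (HTy0 : Theta Q y0 = Theta Q (Cdiv z lam)) by (apply theta_qinv; auto).
  set (G := theta_double_term Q (transform_coef U L Q k al lam) v).
  destruct (series_cv_abs _ Habs) as [Lw HLw].
  destruct (theta_interchange Q (transform_coef U L Q k al lam) v _ Lw HQ Hv
              (fun m => transform_coef_row U L Q k al lam a1 z m HQ Hk Hlam Ha1 Hz HkL) Habs HLw)
    as [Hcol Hsum].
  set (R0 := Cdiv (Theta Q (Cmul c (Cmul a1 lam))) (Cmul (Theta Q (Cmul c lam)) (Theta Q y0))).
  assert (Hterm : forall n, Cmul R0 (csum (fun m => G m n)) =
    qLaplace_term Q d (fun zeta => Cmul (Cdiv (Theta Q (Cmul c (Cmul a1 zeta))) (Theta Q (Cmul c zeta)))
                                        (phi U L (RtoC (/ Q)) (Cdiv al zeta))) z n).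
  { intro n.
    assert (Htt : theta_term Q v n <> C0).
    { rewrite theta_term_eq. apply Cmul_neq0; [apply RtoC_powerRZ_neq0; lra | apply Cpowz_neq0; auto]. }
    assert (Hphi : phi U L (RtoC (/ Q)) (Cdiv al (Cmul (RtoC (powerRZ Q n)) lam))
                   = Cmul (Cinv (theta_term Q v n)) (csum (fun m => G m n))).
    { apply csum_spec. eapply series_cv_ext; [| exact (series_cv_scal _ _ _ (Hcol n))].
      intro m. cbv beta. unfold G. rewrite <- phi_term_at_node by auto. field. exact Htt. }
    rewrite qLaplace_term_nodes by auto. fold lam y0.
    rewrite (qLaplace_term_factor Q lam c a1 z y0) by (auto; rewrite HTy0; auto).
    rewrite Hphi. fold v R0. f_equal. field. exact Htt. }
  replace (phi (U ++ C0 :: nil) L (RtoC (/ Q)) w) with Lw by (symmetry; apply csum_spec, HLw).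
  match goal with |- bseries_cv _ ?X =>
    replace X with (Cmul R0 (Cmul (Theta Q v) Lw))
      by (unfold R0; rewrite HTy0; unfold Cdiv; rewrite !Cinv_mul; ring) end.
  apply (bseries_cv_ext _ _ _ Hterm), bseries_cv_scal, Hsum.
Qed.

(* The parameters of Lemma 7.2 avoid the powers of q, so no q-Pochhammer factor vanishes.
   Parameters of the shape [y / (Q b)] avoid [Q^n] as soon as [y] avoids [Q^(n+1) b]. *)
Lemma ratio_not_qpow (Q : R) (y b : Cx) n : 1 < Q -> b <> C0 ->
  y <> Cmul (RtoC (powerRZ Q (Z.of_nat (S n)))) b ->
  Cdiv (Cmul y (RtoC (/ Q))) b <> RtoC (Q ^ n).
Proof.
  intros HQ Hb Hy E. apply Hy.
  assert (RtoC Q <> C0) by (apply RtoC_neq0; lra).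
  transitivity (Cmul (Cmul (Cdiv (Cmul y (RtoC (/ Q))) b) (RtoC Q)) b).
  - rewrite RtoC_inv. unfold Cdiv. field. auto.
  - rewrite E, <- pow_powerRZ, <- RtoC_mul. replace (Q ^ S n) with (Q ^ n * Q) by (simpl; ring).
    reflexivity.
Qed.

Lemma upper_params_not_qpow (Q : R) (a1 : Cx) (b : nat -> Cx) (s : nat) : 1 < Q ->
  (forall n : nat, a1 <> RtoC (Q ^ n)) ->
  (forall j, (1 <= j <= s)%nat -> b j <> C0) ->
  (forall j, (1 <= j <= s)%nat -> forall k : Z, a1 <> Cmul (RtoC (powerRZ Q k)) (b j)) ->
  forall x, In x ((a1 :: map (fun j => Cdiv (Cmul a1 (RtoC (/ Q))) (b j)) (seq 1 s)) ++ C0 :: nil) ->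
  forall n, x <> RtoC (Q ^ n).
Proof.
  intros HQ Ha Hb Hab x Hx n. apply in_app_or in Hx. destruct Hx as [[<- | Hx] | [<- | []]].
  - apply Ha.
  - apply in_map_iff in Hx. destruct Hx as [j [<- Hj]]. apply in_seq in Hj.
    apply ratio_not_qpow; auto; [apply Hb | apply Hab]; lia.
  - intro E. injection E as E. pose proof (pow_lt Q n ltac:(lra)). lra.
Qed.

Lemma lower_params_not_qpow (Q : R) (a : nat -> Cx) (r : nat) : 1 < Q ->
  (forall i, (2 <= i <= r)%nat -> a i <> C0) ->
  (forall i, (2 <= i <= r)%nat -> forall k : Z, a 1%nat <> Cmul (RtoC (powerRZ Q k)) (a i)) ->
  forall x, In x (map (fun i => Cdiv (Cmul (a 1%nat) (RtoC (/ Q))) (a i)) (seq 2 (r - 1))) ->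
  forall n, x <> RtoC (Q ^ n).
Proof.
  intros HQ Ha Hdist x Hx n. apply in_map_iff in Hx. destruct Hx as [i [<- Hi]]. apply in_seq in Hi.
  apply ratio_not_qpow; auto; [apply Ha | apply Hdist]; lia.
Qed.

Lemma Rpower_root_gt1 (q : R) (k : nat) : 1 < q -> (1 <= k)%nat -> 1 < Rpower q (/ INR k).
Proof.
  intros Hq Hk. rewrite <- (Rpower_O q) by lra. apply Rpower_lt; auto.
  apply Rinv_0_lt_compat, lt_0_INR; lia.
Qed.

Theorem lemma7p2
  (q : R) (r s : nat) (a b : nat -> Cx) (d : R) (z : Cx)
  (Hq : 1 < q)
  (Hrs : (s + 1 < r)%nat)
  (Ha_notq : forall i, (1 <= i <= r)%nat -> forall n : nat, a i <> RtoC (q ^ n))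
  (Hb_notq : forall j, (1 <= j <= s)%nat -> forall n : nat, b j <> RtoC (q ^ n))
  (Ha_nz : forall i, (1 <= i <= r)%nat -> a i <> C0)
  (Hb_nz : forall j, (1 <= j <= s)%nat -> b j <> C0)
  (Ha_dist : forall i i', (1 <= i <= r)%nat -> (1 <= i' <= r)%nat -> i <> i' ->
      forall k : Z, a i <> Cmul (RtoC (powerRZ q k)) (a i'))
  (Hb_dist : forall j j', (1 <= j <= s)%nat -> (1 <= j' <= s)%nat -> j <> j' ->
      forall k : Z, b j <> Cmul (RtoC (powerRZ q k)) (b j'))
  (Hab_dist : forall i j, (1 <= i <= r)%nat -> (1 <= j <= s)%nat ->
      forall k : Z, a i <> Cmul (RtoC (powerRZ q k)) (b j))
  (Hd : forall k : Z, d <> INR (r - s - 1) * PI + 2 * IZR k * PI)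
  (Hz : z <> C0)
  : let uq := Rpower q (/ INR (r - s - 1)) in
    let up := / uq in
    let lam := Cmul (RtoC (uq - 1)) (Cexpi d) in
    let sgn := Cpow (RtoC (-1)) (r - s) in            (* (-1)^{s-r} *)
    let alpha := Cdiv (Cmul (Cmul (Cmul (Cpow (RtoC (-1)) (r - s - 1)) (RtoC up))
                                  (Cpow (a 1%nat) (r - s - 2)))
                            (Cprod_range b 1 s))
                      (Cprod_range a 2 (r - 1)) in
    let upper := a 1%nat :: map (fun j => Cdiv (Cmul (a 1%nat) (RtoC up)) (b j)) (seq 1 s) in
    let lower := map (fun i => Cdiv (Cmul (a 1%nat) (RtoC up)) (a i)) (seq 2 (r - 1)) in
    let f := fun zeta : Cx =>
      Cmul (Cdiv (Theta uq (Cmul sgn (Cmul (a 1%nat) zeta))) (Theta uq (Cmul sgn zeta)))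
           (phi upper lower (RtoC up) (Cdiv alpha zeta)) in
    let w := Copp (Cdiv alpha (Cmul (Cmul (a 1%nat) (RtoC up)) z)) in
    Theta uq (Cdiv z lam) <> C0 ->
    phi_converges (upper ++ C0 :: nil) lower (RtoC up) w ->
    bseries_cv (qLaplace_term uq d f z)
      (Cmul (Cmul (Cdiv (Theta uq (Cmul sgn (Cmul (a 1%nat) lam))) (Theta uq (Cmul sgn lam)))
                  (Cdiv (Theta uq (Cdiv (Cmul (a 1%nat) z) lam)) (Theta uq (Cdiv z lam))))
            (phi (upper ++ C0 :: nil) lower (RtoC up) w)).
Proof.
  intros uq up lam sgn alpha upper lower f w HD Hconv.
  assert (HQ : 1 < uq) by (apply Rpower_root_gt1; [exact Hq | lia]).
  assert (Hk : (1 + Z.of_nat (length lower) - Z.of_nat (length upper))%Z = Z.of_nat (r - s - 1)).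
  { unfold upper, lower. simpl length. rewrite !length_map, !length_seq. lia. }
  assert (HkR : (1 + Z.of_nat (length lower) - Z.of_nat (length (upper ++ C0 :: nil)))%Z
                = Z.of_nat (r - s - 2)).
  { rewrite length_app. change (length (C0 :: nil)) with 1%nat. lia. }
  assert (Habs : ex_series (fun m => Cnorm (phi_term (upper ++ C0 :: nil) lower (RtoC up) w m))).
  { destruct (Nat.eq_dec (r - s - 1) 1) as [Hk1 | Hk2].
    - (* r = s + 2: here [uq = q], and the parameter hypotheses give absolute convergence *)
      assert (Huq : uq = q) by (unfold uq; rewrite Hk1; simpl; rewrite Rinv_1; apply Rpower_1; lra).
      apply phi_abs_convergent_k0; auto.
      + rewrite HkR. f_equal. lia.
      + apply upper_params_not_qpow; rewrite ?Huq; auto; intros; apply Ha_notq || apply Hab_dist; lia.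
      + apply lower_params_not_qpow; rewrite ?Huq; auto; intros; apply Ha_nz || apply Ha_dist; lia.
    - (* r > s + 2: the Gaussian factor alone gives absolute convergence *)
      apply (phi_abs_convergent _ _ up w (r - s - 2)).
      + split; [apply Rinv_0_lt_compat | rewrite <- Rinv_1; apply Rinv_lt_contravar]; lra.
      + exact HkR.
      + left. lia. }
  apply (qLaplace_theta_phi uq d upper lower (r - s - 1)); auto.
  - lia.
  - apply Cpow_neq0, RtoC_neq0. lra.
  - apply Ha_nz. lia.
Qed.
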